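(* (i) Let $(b_{ij})_{1\le i,j\le 3}$ be the canonical generators of $C(B_3^+)$. Then the linear span of $\{b_{mn}b_{st}: m,n,s,t\in\{1,2,3\}\}$ (the entries of $u_{B_3^+}^{\otimes2}=\sum_{m,n,s,t}b_{mn}b_{st}\otimes E_{mn}\otimes E_{st}$) has dimension $14$. (ii) Let $(o_{ij})_{1\le i,j\le 2}$ be the canonical generators of $C(O_2^+)$. Then the linear span of $\{o_{mn}o_{st}: m,n,s,t\in\{1,2\}\}$ (the entries of $u_{O_2^+}^{\otimes2}$) has dimension $10$.
   Context: $C(O_N^+)$ (free orthogonal quantum group) is the universal unital $C^*$-algebra generated by self-adjoint elements $o_{ij}$, $1\le i,j\le N$, such that the matrix $(o_{ij})$ is orthogonal, i.e. $\sum_k o_{ik}o_{jk}=\sum_k o_{ki}o_{kj}=\delta_{ij}\mathbb 1$. $C(B_N^+)$ (free bistochastic quantum group) is the universal unital $C^*$-algebra generated by self-adjoint $b_{ij}$, $1\le i,j\le N$, such that $(b_{ij})$ is orthogonal and every row and every column sums to $\mathbb 1$: $\sum_k b_{ik}=\sum_k b_{ki}=\mathbb 1$ for all $i$. (Equivalently these are the easy quantum groups of all non-crossing partitions with blocks of size $2$, resp. of size $1$ or $2$.) $E_{mn}$ denote matrix units. *)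

From HB Require Import structures.
From mathcomp Require Import all_boot all_order all_algebra all_field.
Set Implicit Arguments. Unset Strict Implicit. Unset Printing Implicit Defensive.
Import GRing.Theory Num.Theory.
Local Open Scope ring_scope.

Definition gen (N : nat) := ('I_N * 'I_N)%type.
Definition word (N : nat) := seq (gen N).
(* a noncommutative polynomial = formal finite sum of (coefficient, monomial) *)
Definition ncpoly (N : nat) := seq (algC * word N).

Definition nccoef N (p : ncpoly N) (w : word N) : algC :=
  \sum_(m <- p) (if m.2 == w then m.1 else 0).
Definition ncadd N (p q : ncpoly N) : ncpoly N := p ++ q.
Definition ncscale N (c : algC) (p : ncpoly N) : ncpoly N :=
  [seq (c * m.1, m.2) | m <- p].
Definition ncmul N (p q : ncpoly N) : ncpoly N :=
  [seq (a.1 * b.1, a.2 ++ b.2) | a <- p, b <- q].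
Definition ncsub N (p q : ncpoly N) : ncpoly N := ncadd p (ncscale (-1) q).
Definition ncone (N : nat) : ncpoly N := [:: (1, [::])].
Definition ncmono N (w : word N) : ncpoly N := [:: (1, w)].
Definition ncgen N (i j : 'I_N) : ncpoly N := [:: (1, [:: (i, j)])].
Definition ncsum N (s : seq (ncpoly N)) : ncpoly N := flatten s.
Definition nclin N (I : finType) (c : I -> algC) (F : I -> ncpoly N) : ncpoly N :=
  ncsum [seq ncscale (c i) (F i) | i <- enum I].

(* p lies in the two-sided ideal generated by rels:
   p = sum_k c_k * a_k * r_k * b_k  (as polynomials), with r_k in rels *)
Definition in_ideal N (rels : seq (ncpoly N)) (p : ncpoly N) : Prop :=
  exists t : seq (algC * word N * ncpoly N * word N),
    (forall x, x \in t -> x.1.2 \in rels) /\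
    forall w, nccoef p w =
      nccoef (ncsum [seq ncscale x.1.1.1
                       (ncmul (ncmul (ncmono x.1.1.2) x.1.2) (ncmono x.2))
                    | x <- t]) w.

Definition eqmod N (rels : seq (ncpoly N)) (p q : ncpoly N) : Prop :=
  in_ideal rels (ncsub p q).

Definition delta N (i j : 'I_N) : algC := (i == j)%:R.

Definition orth_rels (N : nat) : seq (ncpoly N) :=
  [seq ncsub (ncsum [seq ncmul (ncgen i k) (ncgen j k) | k <- enum 'I_N])
             (ncscale (delta i j) (ncone N)) | i <- enum 'I_N, j <- enum 'I_N]
  ++
  [seq ncsub (ncsum [seq ncmul (ncgen k i) (ncgen k j) | k <- enum 'I_N])
             (ncscale (delta i j) (ncone N)) | i <- enum 'I_N, j <- enum 'I_N].

Definition bist_rels (N : nat) : seq (ncpoly N) :=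
  orth_rels N
  ++ [seq ncsub (ncsum [seq ncgen i k | k <- enum 'I_N]) (ncone N) | i <- enum 'I_N]
  ++ [seq ncsub (ncsum [seq ncgen k i | k <- enum 'I_N]) (ncone N) | i <- enum 'I_N].

Definition span_dim N (rels : seq (ncpoly N)) (I : finType) (F : I -> ncpoly N)
    (d : nat) : Prop :=
  exists e : 'I_d -> ncpoly N,
    (forall k, exists c : I -> algC, eqmod rels (e k) (nclin c F)) /\
    (forall a : 'I_d -> algC, in_ideal rels (nclin a e) -> forall k, a k = 0) /\
    (forall i, exists a : 'I_d -> algC, eqmod rels (F i) (nclin a e)).

Definition tensor2_entries (N : nat) (x : 'I_N * 'I_N * 'I_N * 'I_N) : ncpoly N :=
  ncmul (ncgen x.1.1.1 x.1.1.2) (ncgen x.1.2 x.2).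

From HB Require Import structures.
From mathcomp Require Import all_boot all_order all_algebra all_field.
Set Implicit Arguments. Unset Strict Implicit. Unset Printing Implicit Defensive.
Import GRing.Theory Num.Theory.
Local Open Scope ring_scope.

(* Both dimensions are certified by finite rational data.  Spanning: each product x_mn x_st
   is congruent, modulo an explicit combination of terms u r v with r a defining relation,
   to a rational combination of d chosen products.  Independence: rational 2x2 matrices
   satisfying the defining relations are representations of the quotient algebra, so each
   matrix entry of such a representation is a linear functional vanishing on the ideal; the
   matrix of values of these functionals on the d chosen products has an explicit left
   inverse.  The certificates are checked by computation over rat and transported to algC. *)

(* Unlike [enum 'I_n] and [ord_enum n], this enumeration reduces under [vm_compute]. *)
Fixpoint ord_seq n : seq 'I_n :=
  if n is n'.+1 then ord0 :: map (lift ord0) (ord_seq n') else [::].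

Lemma enum_ord_seq n : enum 'I_n = ord_seq n.
Proof. by elim: n => [|n IH]; rewrite ?enum_ord0 // enum_ordSl IH. Qed.

Lemma mem_ord_seq n (i : 'I_n) : i \in ord_seq n.
Proof. by rewrite -enum_ord_seq mem_enum. Qed.

Section NCPoly.
Variables (R : comNzRingType) (N : nat).

Definition ncp := seq (R * word N).
Definition ncp_scale (c : R) (p : ncp) : ncp := [seq (c * m.1, m.2) | m <- p].
Definition ncp_mul (p q : ncp) : ncp :=
  [seq (a.1 * b.1, a.2 ++ b.2) | a <- p, b <- q].
Definition ncp_sub (p q : ncp) : ncp := p ++ ncp_scale (-1) q.
Definition ncp_one : ncp := [:: (1, [::])].
Definition ncp_mono (w : word N) : ncp := [:: (1, w)].
Definition ncp_gen (i j : 'I_N) : ncp := [:: (1, [:: (i, j)])].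
Definition ncp_lin (I : finType) (c : I -> R) (F : I -> ncp) : ncp :=
  flatten [seq ncp_scale (c i) (F i) | i <- enum I].
Definition ncp_coef (p : ncp) (w : word N) : R :=
  \sum_(m <- p) (if m.2 == w then m.1 else 0).

Definition tensor2 (x : 'I_N * 'I_N * 'I_N * 'I_N) : ncp :=
  ncp_mul (ncp_gen x.1.1.1 x.1.1.2) (ncp_gen x.1.2 x.2).

Definition orth_relations (e : seq 'I_N) : seq ncp :=
  [seq ncp_sub (flatten [seq ncp_mul (ncp_gen i k) (ncp_gen j k) | k <- e])
               (ncp_scale (i == j)%:R ncp_one) | i <- e, j <- e]
  ++ [seq ncp_sub (flatten [seq ncp_mul (ncp_gen k i) (ncp_gen k j) | k <- e])
               (ncp_scale (i == j)%:R ncp_one) | i <- e, j <- e].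

Definition bist_relations (e : seq 'I_N) : seq ncp :=
  orth_relations e
  ++ [seq ncp_sub (flatten [seq ncp_gen i k | k <- e]) ncp_one | i <- e]
  ++ [seq ncp_sub (flatten [seq ncp_gen k i | k <- e]) ncp_one | i <- e].

Lemma eq_ncp_lin (I : finType) (c : I -> R) (F G : I -> ncp) :
  F =1 G -> ncp_lin c F = ncp_lin c G.
Proof. by move=> eqFG; congr flatten; apply: eq_map => i; rewrite eqFG. Qed.

Lemma ncp_coef_cat p q w : ncp_coef (p ++ q) w = ncp_coef p w + ncp_coef q w.
Proof. exact: big_cat. Qed.

Lemma ncp_coef_scale c p w : ncp_coef (ncp_scale c p) w = c * ncp_coef p w.
Proof.
rewrite /ncp_coef big_map mulr_sumr; apply: eq_bigr => m _ /=.
by case: ifP; rewrite ?mulr0.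
Qed.

Lemma ncp_coef_flatten ps w :
  ncp_coef (flatten ps) w = \sum_(p <- ps) ncp_coef p w.
Proof.
elim: ps => [|p ps IH]; first by rewrite /ncp_coef !big_nil.
by rewrite big_cons -IH -ncp_coef_cat.
Qed.

Lemma ncp_coef_notin p w : w \notin map snd p -> ncp_coef p w = 0.
Proof.
move=> wNp; rewrite /ncp_coef big_seq big1 // => m mp.
by case: eqP => // eqw; case/negP: wNp; rewrite -eqw map_f.
Qed.

End NCPoly.
Arguments tensor2 R {N} x.

Lemma ncsumE N : @ncsum N = flatten. Proof. by []. Qed.
Lemma ncscaleE N : @ncscale N = @ncp_scale algC N. Proof. by []. Qed.
Lemma ncmulE N : @ncmul N = @ncp_mul algC N. Proof. by []. Qed.
Lemma ncsubE N : @ncsub N = @ncp_sub algC N. Proof. by []. Qed.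
Lemma ncmonoE N : @ncmono N = @ncp_mono algC N. Proof. by []. Qed.
Lemma nclinE N (I : finType) : @nclin N I = @ncp_lin algC N I. Proof. by []. Qed.
Lemma nccoefE N : @nccoef N = @ncp_coef algC N. Proof. by []. Qed.
Lemma tensor2_entriesE N : @tensor2_entries N = @tensor2 algC N. Proof. by []. Qed.

Lemma orth_relsE N : orth_rels N = orth_relations algC (enum 'I_N).
Proof. by []. Qed.
Lemma bist_relsE N : bist_rels N = bist_relations algC (enum 'I_N).
Proof. by []. Qed.

Section CoefChange.
Variables (R S : comNzRingType) (f : {rmorphism R -> S}) (N : nat).

Definition ncp_map (p : ncp R N) : ncp S N := [seq (f m.1, m.2) | m <- p].

Lemma ncp_map_cat p q : ncp_map (p ++ q) = ncp_map p ++ ncp_map q.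
Proof. exact: map_cat. Qed.

Lemma ncp_map_flatten ps : ncp_map (flatten ps) = flatten (map ncp_map ps).
Proof. by elim: ps => //= p ps IH; rewrite ncp_map_cat IH. Qed.

Lemma ncp_map_scale c p : ncp_map (ncp_scale c p) = ncp_scale (f c) (ncp_map p).
Proof. by rewrite /ncp_map /ncp_scale -!map_comp; apply: eq_map => m /=; rewrite rmorphM. Qed.

Lemma ncp_map_mul p q : ncp_map (ncp_mul p q) = ncp_mul (ncp_map p) (ncp_map q).
Proof.
rewrite /ncp_map /ncp_mul map_allpairs allpairs_mapl allpairs_mapr.
by apply: eq_allpairs => a b /=; rewrite rmorphM.
Qed.

Lemma ncp_map_sub p q : ncp_map (ncp_sub p q) = ncp_sub (ncp_map p) (ncp_map q).
Proof. by rewrite /ncp_sub ncp_map_cat ncp_map_scale rmorphN1. Qed.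

Lemma ncp_map_mono w : ncp_map (ncp_mono R w) = ncp_mono S w.
Proof. by rewrite /ncp_map /= rmorph1. Qed.

Lemma ncp_map_one : ncp_map (ncp_one R N) = ncp_one S N.
Proof. by rewrite /ncp_map /= rmorph1. Qed.

Lemma ncp_map_gen i j : ncp_map (ncp_gen R i j) = ncp_gen S i j.
Proof. by rewrite /ncp_map /= rmorph1. Qed.

Lemma ncp_map_tensor2 x : ncp_map (tensor2 R x) = tensor2 S x.
Proof. by rewrite ncp_map_mul !ncp_map_gen. Qed.

Lemma ncp_map_lin (I : finType) (c : I -> R) (F : I -> ncp R N) :
  ncp_map (ncp_lin c F) = ncp_lin (fun i => f (c i)) (fun i => ncp_map (F i)).
Proof.
rewrite ncp_map_flatten -map_comp; congr flatten; apply: eq_map => i.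
exact: ncp_map_scale.
Qed.

Lemma ncp_coef_map p w : ncp_coef (ncp_map p) w = f (ncp_coef p w).
Proof.
rewrite /ncp_coef big_map rmorph_sum; apply: eq_bigr => m _ /=.
by case: ifP; rewrite ?rmorph0.
Qed.

Lemma map_orth_relations e :
  map ncp_map (orth_relations R e) = orth_relations S e.
Proof.
rewrite /orth_relations map_cat !map_allpairs.
congr (_ ++ _); apply: eq_allpairs => i j;
  rewrite ncp_map_sub ncp_map_scale rmorph_nat ncp_map_one ncp_map_flatten -map_comp;
  congr (ncp_sub (flatten _) _); apply: eq_map => k; rewrite [LHS]/comp;
  by rewrite ncp_map_mul !ncp_map_gen.
Qed.

Lemma map_bist_relations e :
  map ncp_map (bist_relations R e) = bist_relations S e.
Proof.
rewrite /bist_relations map_cat map_orth_relations !map_cat -!map_comp.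
congr (_ ++ (_ ++ _)); apply: eq_map => i /=;
  rewrite ncp_map_sub ncp_map_one ncp_map_flatten -map_comp;
  congr (ncp_sub (flatten _) _); apply: eq_map => k; rewrite [LHS]/comp; exact: ncp_map_gen.
Qed.

End CoefChange.
Arguments ncp_map {R S} f {N} p.

Section Evaluation.
Variables (R : comNzRingType) (A : algType R) (N : nat) (rho : gen N -> A).

Definition word_eval (w : word N) : A := foldr (fun g a => rho g * a) 1 w.
Definition ncp_eval (p : ncp R N) : A := \sum_(m <- p) m.1 *: word_eval m.2.

Lemma word_eval_cat w1 w2 : word_eval (w1 ++ w2) = word_eval w1 * word_eval w2.
Proof. by elim: w1 => [|g w1 IH] /=; rewrite ?mul1r // IH mulrA. Qed.

Lemma ncp_eval_cat p q : ncp_eval (p ++ q) = ncp_eval p + ncp_eval q.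
Proof. exact: big_cat. Qed.

Lemma ncp_eval_flatten ps : ncp_eval (flatten ps) = \sum_(p <- ps) ncp_eval p.
Proof.
elim: ps => [|p ps IH]; first by rewrite /ncp_eval !big_nil.
by rewrite big_cons -IH -ncp_eval_cat.
Qed.

Lemma ncp_eval_scale c p : ncp_eval (ncp_scale c p) = c *: ncp_eval p.
Proof.
rewrite /ncp_eval big_map scaler_sumr; apply: eq_bigr => m _.
by rewrite scalerA.
Qed.

Lemma ncp_eval_mul p q : ncp_eval (ncp_mul p q) = ncp_eval p * ncp_eval q.
Proof.
rewrite /ncp_eval big_allpairs_dep mulr_suml; apply: eq_bigr => a _.
rewrite mulr_sumr; apply: eq_bigr => b _.
by rewrite word_eval_cat -scalerAl -scalerAr scalerA.
Qed.

Lemma ncp_eval_by_coef p (s : seq (word N)) :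
  uniq s -> {subset map snd p <= s} ->
  ncp_eval p = \sum_(w <- s) ncp_coef p w *: word_eval w.
Proof.
move=> s_uniq sub_ps; under [RHS]eq_bigr do rewrite scaler_suml.
rewrite exchange_big /= [LHS]big_seq [RHS]big_seq; apply: eq_bigr => m mp.
rewrite (bigD1_seq m.2) ?sub_ps ?map_f //= eqxx big1 ?addr0 // => w /negbTE.
by rewrite eq_sym => ->; rewrite scale0r.
Qed.

Lemma eq_ncp_eval p q :
  (forall w, ncp_coef p w = ncp_coef q w) -> ncp_eval p = ncp_eval q.
Proof.
move=> eq_pq; set s := undup (map snd (p ++ q)).
have sub_s r : {subset map snd r <= map snd (p ++ q)} -> {subset map snd r <= s}.
  by move=> sub_r w /sub_r; rewrite mem_undup.
rewrite !(@ncp_eval_by_coef _ s) ?undup_uniq //; last 2 first.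
- by apply: sub_s => w; rewrite map_cat mem_cat => ->; rewrite orbT.
- by apply: sub_s => w; rewrite map_cat mem_cat => ->.
by apply: eq_bigr => w _; rewrite eq_pq.
Qed.

End Evaluation.

Lemma ncp_eval_ideal N (A : algType algC) (rho : gen N -> A) rels p :
  (forall r, r \in rels -> ncp_eval rho r = 0) -> in_ideal rels p ->
  ncp_eval rho p = 0.
Proof.
move=> rho_rels [t [t_rels t_coef]]; rewrite (eq_ncp_eval rho t_coef).
rewrite ncsumE ncp_eval_flatten big_map big_seq big1 // => x /t_rels x_rel.
by rewrite ncscaleE !ncmulE ncp_eval_scale !ncp_eval_mul (rho_rels _ x_rel) mulr0 mul0r scaler0.
Qed.

Section TwoByTwo.
Variable R : comNzRingType.

(* A stand-in for ['M[R]_2] that reduces under [vm_compute], where matrix operations,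
   being locked, do not. *)
Record m2 := M2 { m11 : R; m12 : R; m21 : R; m22 : R }.

Definition m2entry (A : m2) (i j : nat) : R :=
  match i, j with
  | 0, 0 => m11 A | 0, _ => m12 A | _, 0 => m21 A | _, _ => m22 A
  end%N.

Definition m2add (A B : m2) : m2 :=
  M2 (m11 A + m11 B) (m12 A + m12 B) (m21 A + m21 B) (m22 A + m22 B).
Definition m2scale (c : R) (A : m2) : m2 :=
  M2 (c * m11 A) (c * m12 A) (c * m21 A) (c * m22 A).
Definition m2mul (A B : m2) : m2 :=
  M2 (m11 A * m11 B + m12 A * m21 B) (m11 A * m12 B + m12 A * m22 B)
     (m21 A * m11 B + m22 A * m21 B) (m21 A * m12 B + m22 A * m22 B).
Definition m2zero : m2 := M2 0 0 0 0.
Definition m2one : m2 := M2 1 0 0 1.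
Definition m2eqb (A B : m2) : bool :=
  [&& m11 A == m11 B, m12 A == m12 B, m21 A == m21 B & m22 A == m22 B].

Lemma m2eqbP A B : m2eqb A B -> A = B.
Proof. by case: A B => ? ? ? ? [? ? ? ?] /and4P[/eqP/= -> /eqP/= -> /eqP/= -> /eqP/= ->]. Qed.

Variables (N : nat) (rho : gen N -> m2).

Definition m2_word_eval (w : word N) : m2 := foldr (fun g a => m2mul (rho g) a) m2one w.
Definition m2_eval (p : ncp R N) : m2 :=
  foldr (fun m a => m2add (m2scale m.1 (m2_word_eval m.2)) a) m2zero p.

End TwoByTwo.

Section TwoByTwoMatrix.
Variables (R S : comNzRingType) (f : {rmorphism R -> S}).

Definition m2_mx (A : m2 R) : 'M[S]_2 := \matrix_(i, j) f (m2entry A i j).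

Lemma m2_mx_add A B : m2_mx (m2add A B) = m2_mx A + m2_mx B.
Proof.
apply/matrixP => i j; rewrite !mxE.
by case: i j => [[|[|//]] ?] [[|[|//]] ?]; rewrite /= rmorphD.
Qed.

Lemma m2_mx_scale c A : m2_mx (m2scale c A) = f c *: m2_mx A.
Proof.
apply/matrixP => i j; rewrite !mxE.
by case: i j => [[|[|//]] ?] [[|[|//]] ?]; rewrite /= rmorphM.
Qed.

Lemma m2_mx_mul A B : m2_mx (m2mul A B) = m2_mx A * m2_mx B.
Proof.
apply/matrixP => i j; rewrite !mxE big_ord_recl big_ord1 !mxE.
by case: i j => [[|[|//]] ?] [[|[|//]] ?]; rewrite /= rmorphD !rmorphM.
Qed.

Lemma m2_mx_zero : m2_mx (m2zero R) = 0.
Proof.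
apply/matrixP => i j; rewrite !mxE.
by case: i j => [[|[|//]] ?] [[|[|//]] ?]; rewrite /= rmorph0.
Qed.

Lemma m2_mx_one : m2_mx (m2one R) = 1.
Proof.
apply/matrixP => i j; rewrite !mxE.
by case: i j => [[|[|//]] ?] [[|[|//]] ?]; rewrite /= ?rmorph0 ?rmorph1.
Qed.

Lemma m2_mx_eval N (rho : gen N -> m2 R) p :
  m2_mx (m2_eval rho p) = ncp_eval (m2_mx \o rho) (ncp_map f p).
Proof.
have word_eval_mx w : m2_mx (m2_word_eval rho w) = word_eval (m2_mx \o rho) w.
  by elim: w => [|g w IH] /=; rewrite ?m2_mx_one // m2_mx_mul IH.
elim: p => [|m p IH]; first by rewrite m2_mx_zero /ncp_eval big_nil.
by rewrite /= m2_mx_add m2_mx_scale word_eval_mx IH /ncp_eval big_cons.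
Qed.

End TwoByTwoMatrix.

Section IdealCertificate.
Variables (R : comNzRingType) (N : nat).

Definition coef_fold (p : ncp R N) (w : word N) : R :=
  foldr (fun m c => if m.2 == w then m.1 + c else c) 0 p.

Lemma coef_foldE p w : coef_fold p w = ncp_coef p w.
Proof.
elim: p => [|m p IH]; first by rewrite /ncp_coef big_nil.
by rewrite /ncp_coef big_cons -/(ncp_coef p w) -IH /=; case: ifP; rewrite ?add0r.
Qed.

Definition same_coefs (p q : ncp R N) : bool :=
  all (fun w => coef_fold p w == coef_fold q w) (map snd (p ++ q)).

Lemma same_coefsP p q : same_coefs p q -> forall w, ncp_coef p w = ncp_coef q w.
Proof.
move=> /allP same w; rewrite -!coef_foldE.
have [/same/eqP //|] := boolP (w \in map snd (p ++ q)).
rewrite map_cat mem_cat negb_or => /andP[/ncp_coef_notin wNp /ncp_coef_notin wNq].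
by rewrite !coef_foldE wNp wNq.
Qed.

(* A certificate entry [(c, u, k, v)] stands for [c u r_k v], [r_k] the [k]-th relation. *)
Definition ideal_comb (rels : seq (ncp R N)) (t : seq (R * word N * nat * word N)) :=
  flatten [seq ncp_scale x.1.1.1 (ncp_mul (ncp_mul (ncp_mono R x.1.1.2)
                 (nth [::] rels x.1.2)) (ncp_mono R x.2)) | x <- t].

Definition ideal_check rels p t : bool :=
  all (fun x => x.1.2 < size rels)%N t && same_coefs p (ideal_comb rels t).

End IdealCertificate.

Lemma in_ideal_of_check (R : comNzRingType) (f : {rmorphism R -> algC}) N
    (rels : seq (ncp R N)) p t :
  ideal_check rels p t -> in_ideal (map (ncp_map f) rels) (ncp_map f p).
Proof.
case/andP => /allP t_size same.
exists [seq (f x.1.1.1, x.1.1.2, ncp_map f (nth [::] rels x.1.2), x.2) | x <- t].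
split=> [_ /mapP[x xt ->]|w]; first by rewrite /= map_f ?mem_nth ?t_size.
rewrite nccoefE ncp_coef_map (same_coefsP same) -ncp_coef_map.
rewrite ncsumE ncscaleE ncmulE ncmonoE ncp_map_flatten -!map_comp.
congr (ncp_coef (flatten _) w); apply: eq_map => x /=.
by rewrite ncp_map_scale !ncp_map_mul !ncp_map_mono.
Qed.

Lemma eqmod_nclin_delta N rels (I : finType) (F : I -> ncpoly N) (i : I) :
  eqmod rels (F i) (nclin (fun j => (j == i)%:R) F).
Proof.
exists [::]; split=> // w; rewrite ncsubE nclinE nccoefE ncsumE /ncp_lin /ncp_sub.
rewrite ncp_coef_cat ncp_coef_scale ncp_coef_flatten big_map.
rewrite (bigD1_seq i) ?mem_enum ?enum_uniq //= ncp_coef_scale eqxx mul1r.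
rewrite big1 => [|j /negbTE ->]; last by rewrite ncp_coef_scale mul0r.
by rewrite addr0 mulN1r subrr /ncp_coef big_nil.
Qed.

Lemma span_dim_of_subfamily N rels (I : finType) (F : I -> ncpoly N) d (b : 'I_d -> I) :
  (forall i, exists a, eqmod rels (F i) (nclin a (F \o b))) ->
  (forall a, in_ideal rels (nclin a (F \o b)) -> forall k, a k = 0) ->
  span_dim rels F d.
Proof.
move=> span free; exists (F \o b); split; [|split=> //].
by move=> k; exists (fun i => (i == b k)%:R); apply: eqmod_nclin_delta.
Qed.

Lemma ncp_eval_nclin N (A : algType algC) (rho : gen N -> A) (I : finType)
    (a : I -> algC) (F : I -> ncpoly N) :
  ncp_eval rho (nclin a F) = \sum_i a i *: ncp_eval rho (F i).
Proof.
rewrite nclinE ncp_eval_flatten big_map big_enum /=.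
by apply: eq_bigr => i _; rewrite ncp_eval_scale.
Qed.

(* Each [p |-> (rho j p) (ent j)] is a linear functional vanishing on the ideal. *)
Lemma nclin_free_of_reps N rels d (e : 'I_d -> ncpoly N) m n
    (rho : 'I_m -> gen N -> 'M[algC]_n.+1) (ent : 'I_m -> 'I_n.+1 * 'I_n.+1)
    (L : 'M[algC]_(d, m)) :
  (forall j r, r \in rels -> ncp_eval (rho j) r = 0) ->
  L *m \matrix_(j, k) ncp_eval (rho j) (e k) (ent j).1 (ent j).2 = 1%:M ->
  forall a, in_ideal rels (nclin a e) -> forall k, a k = 0.
Proof.
move=> rho_rels; set Q := \matrix_(j, k) _ => LQ a a_ideal k.
have Qa : Q *m \col_k a k = 0.
  apply/matrixP => j i; rewrite !mxE.
  have := congr1 (fun M : 'M_n.+1 => M (ent j).1 (ent j).2) (ncp_eval_ideal (rho_rels j) a_ideal).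
  rewrite ncp_eval_nclin summxE mxE => vanish; rewrite -[RHS]vanish.
  by apply: eq_bigr => k' _; rewrite !mxE mulrC.
have := congr1 (fun v : 'cV_d => v k ord0) (mul1mx (\col_k a k)).
by rewrite -LQ -mulmxA Qa mulmx0 !mxE => <-.
Qed.

Lemma orth_rels_ratr N :
  orth_rels N = map (ncp_map ratr) (orth_relations rat (ord_seq N)).
Proof. by rewrite orth_relsE enum_ord_seq map_orth_relations. Qed.

Lemma bist_rels_ratr N :
  bist_rels N = map (ncp_map ratr) (bist_relations rat (ord_seq N)).
Proof. by rewrite bist_relsE enum_ord_seq map_bist_relations. Qed.

Lemma ncp_lin_ord_seq (R : comNzRingType) N d (c : 'I_d -> R) (F : 'I_d -> ncp R N) :
  ncp_lin c F = flatten [seq ncp_scale (c k) (F k) | k <- ord_seq d].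
Proof. by rewrite /ncp_lin enum_ord_seq. Qed.

Definition mul_id_check (R : nzRingType) d m (A : 'I_d -> 'I_m -> R) (B : 'I_m -> 'I_d -> R) :=
  all (fun i => all (fun k =>
         foldr +%R 0 [seq A i j * B j k | j <- ord_seq m] == (i == k)%:R)
       (ord_seq d)) (ord_seq d).

Lemma mul_id_checkP (R S : comNzRingType) (f : {rmorphism R -> S}) d m
    (A : 'I_d -> 'I_m -> R) (B : 'I_m -> 'I_d -> R) :
  mul_id_check A B -> \matrix_(i, j) f (A i j) *m \matrix_(j, k) f (B j k) = 1%:M.
Proof.
move=> /allP check; apply/matrixP => i k; rewrite !mxE.
move: (allP (check i (mem_ord_seq i)) k (mem_ord_seq k)) => /eqP.
rewrite foldrE big_map -enum_ord_seq big_enum /= => sum_AB.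
rewrite -[RHS](rmorph_nat f) -sum_AB rmorph_sum; apply: eq_bigr => j _.
by rewrite !mxE rmorphM.
Qed.

Definition quad N := ('I_N * 'I_N * 'I_N * 'I_N)%type.

Definition quads N : seq (quad N) :=
  let E := ord_seq N in
  [seq (x, y) | x <- [seq (x, y) | x <- [seq (x, y) | x <- E, y <- E], y <- E], y <- E].

Lemma mem_quads N (x : quad N) : x \in quads N.
Proof. by case: x => [[[a b] c] e]; rewrite !allpairs_f ?mem_ord_seq. Qed.

Section Certificate.
Variables (N d m : nat) (relsQ : seq (ncp rat N)) (b : 'I_d -> quad N).
Variables (rep : 'I_m -> gen N -> m2 rat) (ent : 'I_m -> 'I_2 * 'I_2).
Variables (L : 'I_d -> 'I_m -> rat) (coef : quad N -> 'I_d -> rat).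
Variable wit : quad N -> seq (rat * word N * nat * word N).

Definition reps_kill_rels : bool :=
  all (fun j => all (fun r => m2eqb (m2_eval (rep j) r) (m2zero rat)) relsQ) (ord_seq m).

Definition rep_value (j : 'I_m) (k : 'I_d) : rat :=
  m2entry (m2_eval (rep j) (tensor2 rat (b k))) (ent j).1 (ent j).2.

Definition spanning_check : bool :=
  all (fun i => ideal_check relsQ
         (ncp_sub (tensor2 rat i)
            (flatten [seq ncp_scale (coef i k) (tensor2 rat (b k)) | k <- ord_seq d]))
         (wit i)) (quads N).

Lemma span_dim_of_certificate :
  reps_kill_rels -> mul_id_check L rep_value -> spanning_check ->
  span_dim (map (ncp_map ratr) relsQ) (@tensor2_entries N) d.
Proof.
move=> /allP kill left_inv /allP span.
apply: (span_dim_of_subfamily (b := b)) => [i|].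
  exists (ratr \o coef i).
  have -> : nclin (ratr \o coef i) (@tensor2_entries N \o b)
          = ncp_map ratr (ncp_lin (coef i) (tensor2 rat \o b)).
    by rewrite ncp_map_lin nclinE; apply: eq_ncp_lin => k; rewrite (ncp_map_tensor2 ratr).
  rewrite /eqmod ncsubE tensor2_entriesE -(ncp_map_tensor2 ratr) -ncp_map_sub.
  by rewrite ncp_lin_ord_seq; apply: in_ideal_of_check; apply: span; apply: mem_quads.
apply: (nclin_free_of_reps (rho := fun j => m2_mx ratr \o rep j) (ent := ent)
                           (L := \matrix_(k, j) ratr (L k j))).
  move=> j _ /mapP[r r_rel ->]; rewrite -m2_mx_eval.
  by rewrite (m2eqbP (allP (kill j (mem_ord_seq j)) r r_rel)) m2_mx_zero.
rewrite -(mul_id_checkP ratr left_inv); congr (_ *m _); apply/matrixP => j k.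
by rewrite !mxE /= tensor2_entriesE -(ncp_map_tensor2 ratr) -m2_mx_eval mxE.
Qed.

End Certificate.

Definition qfrac (a b : nat) : rat := a%:R / b%:R.

Definition ord_of_nat n (c : nat) : 'I_n.+1 := nth ord0 (ord_seq n.+1) c.

(* Generator [x_ij] is coded by [i N + j] and the product [x_mn x_st] by the base-[N] numeral
   [mnst]; the rows of [coef_table] and [witness_table] are indexed by these codes, and the
   functional [(r, (i, j))] is the [(i, j)] entry of the [r]-th representation. *)
Record dim_table := DimTable {
  basis_codes : seq nat;
  rep_table : seq (seq (m2 rat));
  functionals : seq (nat * (nat * nat));
  left_inverse : seq (seq rat);
  coef_table : seq (seq rat);
  witness_table : seq (seq (rat * seq nat * nat * seq nat)) }.

Section Table.
Variables (n d : nat) (T : dim_table).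
Local Notation N := n.+1.
Local Notation m := (size (functionals T)).

Definition gen_of_code (c : nat) : gen N := (ord_of_nat n (c %/ N), ord_of_nat n (c %% N)).
Definition code_of_gen (g : gen N) : nat := g.1 * N + g.2.
Definition quad_of_code (c : nat) : quad N :=
  (gen_of_code (c %/ N ^ 2), ord_of_nat n (c %/ N %% N), ord_of_nat n (c %% N)).
Definition code_of_quad (x : quad N) : nat := code_of_gen x.1.1 * N ^ 2 + x.1.2 * N + x.2.

Definition table_basis (k : 'I_d) : quad N := quad_of_code (nth 0 (basis_codes T) k).
Definition table_functional (j : 'I_m) := nth (0, (0, 0)) (functionals T) j.
Definition table_rep (j : 'I_m) (g : gen N) : m2 rat :=
  nth (m2zero rat) (nth [::] (rep_table T) (table_functional j).1) (code_of_gen g).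
Definition table_entry (j : 'I_m) : 'I_2 * 'I_2 :=
  (ord_of_nat 1 (table_functional j).2.1, ord_of_nat 1 (table_functional j).2.2).
Definition table_left_inverse (k : 'I_d) (j : 'I_m) : rat :=
  nth 0 (nth [::] (left_inverse T) k) j.
Definition table_coef (x : quad N) (k : 'I_d) : rat :=
  nth 0 (nth [::] (coef_table T) (code_of_quad x)) k.
Definition table_witness (x : quad N) : seq (rat * word N * nat * word N) :=
  [seq (y.1.1.1, map gen_of_code y.1.1.2, y.1.2, map gen_of_code y.2)
  | y <- nth [::] (witness_table T) (code_of_quad x)].

Definition table_ok (relsQ : seq (ncp rat N)) : bool :=
  [&& reps_kill_rels relsQ table_rep,
      mul_id_check table_left_inverse (rep_value table_basis table_rep table_entry)
    & spanning_check relsQ table_basis table_coef table_witness].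

Lemma span_dim_of_table relsQ :
  table_ok relsQ -> span_dim (map (ncp_map ratr) relsQ) (@tensor2_entries N) d.
Proof. by case/and3P; apply: span_dim_of_certificate. Qed.

End Table.

Definition O2_basis : seq nat :=
  [:: 0; 1; 2; 3; 4; 5; 6; 8; 9; 12]%N.

Definition O2_reps : seq (seq (m2 rat)) :=
  [:: [:: M2 (-1) (-1) (-1) 1; M2 0 (-1) 1 0; M2 0 (-1) 1 0; M2 (-1) (-1) (-1) 1];
      [:: M2 (-1) (-1) (-1) 1; M2 0 (-1) 1 0; M2 0 1 (-1) 0; M2 1 1 1 (-1)];
      [:: M2 (-1) (-1) 0 0; M2 0 (-1) 0 1; M2 0 (-1) 0 1; M2 (-1) (-1) 0 0];
      [:: M2 (-1) (-1) 0 0; M2 0 (-1) 0 1; M2 0 (-1) 0 1; M2 1 1 0 0];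
      [:: M2 (-1) (-1) 0 1; M2 (-1) (-1) 1 1; M2 0 0 (-1) 0; M2 1 1 0 (-1)];
      [:: M2 (-1) (-1) 0 1; M2 (-1) (-1) 1 1; M2 0 0 1 0; M2 (-1) (-1) 0 1];
      [:: M2 (-1) (-1) 0 1; M2 0 (-1) 0 0; M2 0 (-1) 0 0; M2 (-1) 0 0 1]].

Definition O2_functionals : seq (nat * (nat * nat)) :=
  [:: (0, (0, 0)); (0, (0, 1)); (1, (0, 0)); (1, (0, 1)); (2, (0, 0)); (3, (0, 0)); (4, (0, 0));
      (4, (1, 0)); (5, (0, 0)); (6, (0, 1))]%N.

Definition O2_left_inverse : seq (seq rat) :=
  [:: [:: 0; 0; 0; 0; qfrac 1 2; qfrac 1 2; 0; 0; 0; 0];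
      [:: 0; qfrac 1 2; 0; qfrac 1 2; - qfrac 1 2; - qfrac 1 2; qfrac 1 2; 0; qfrac 1 2; 0];
      [:: qfrac 1 4; qfrac 1 4; - qfrac 1 4; - qfrac 3 4; 0; 0; qfrac 1 2; qfrac 1 2; - qfrac 1 2; 0];
      [:: 0; qfrac 1 2; 0; 0; qfrac 1 4; - qfrac 1 4; 0; 0; 0; - qfrac 1 2];
      [:: 0; 0; 0; 0; - qfrac 1 2; - qfrac 1 2; qfrac 1 2; 0; qfrac 1 2; 0];
      [:: - qfrac 1 2; - qfrac 1 2; - qfrac 1 2; - qfrac 1 2; 1; 1; 0; 0; 0; 0];
      [:: - qfrac 1 4; - qfrac 1 4; qfrac 1 4; qfrac 3 4; qfrac 1 2; - qfrac 1 2; 0; - qfrac 1 2; 0; 0];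
      [:: qfrac 1 4; - qfrac 1 4; - qfrac 1 4; - qfrac 1 4; 0; 0; qfrac 1 2; qfrac 1 2; - qfrac 1 2; 0];
      [:: - qfrac 1 4; - qfrac 1 4; qfrac 1 4; - qfrac 1 4; qfrac 1 2; - qfrac 1 2; 0; qfrac 1 2; 0; 0];
      [:: 0; - qfrac 1 2; 0; 0; qfrac 1 4; - qfrac 1 4; 0; 0; 0; qfrac 1 2]].

Definition O2_coefs : seq (seq rat) :=
  [:: [:: 1; 0; 0; 0; 0; 0; 0; 0; 0; 0];
      [:: 0; 1; 0; 0; 0; 0; 0; 0; 0; 0];
      [:: 0; 0; 1; 0; 0; 0; 0; 0; 0; 0];
      [:: 0; 0; 0; 1; 0; 0; 0; 0; 0; 0];
      [:: 0; 0; 0; 0; 1; 0; 0; 0; 0; 0];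
      [:: 0; 0; 0; 0; 0; 1; 0; 0; 0; 0];
      [:: 0; 0; 0; 0; 0; 0; 1; 0; 0; 0];
      [:: 0; 0; -1; 0; 0; 0; 0; 0; 0; 0];
      [:: 0; 0; 0; 0; 0; 0; 0; 1; 0; 0];
      [:: 0; 0; 0; 0; 0; 0; 0; 0; 1; 0];
      [:: 0; 0; 0; 0; 0; 1; 0; 0; 0; 0];
      [:: 0; -1; 0; 0; 0; 0; 0; 0; 0; 0];
      [:: 0; 0; 0; 0; 0; 0; 0; 0; 0; 1];
      [:: 0; 0; 0; 0; 0; 0; 0; -1; 0; 0];
      [:: 0; 0; 0; 0; -1; 0; 0; 0; 0; 0];
      [:: 1; 0; 0; 0; 0; 0; 0; 0; 0; 0]].

Definition O2_witnesses : seq (seq (rat * seq nat * nat * seq nat)) :=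
  [:: [::];
      [::];
      [::];
      [::];
      [::];
      [::];
      [::];
      [:: (1, [::], 1%N, [::])];
      [::];
      [::];
      [:: (1, [::], 4%N, [::]); (-1, [::], 0%N, [::])];
      [:: (1, [::], 5%N, [::])];
      [::];
      [:: (1, [::], 2%N, [::])];
      [:: (1, [::], 6%N, [::])];
      [:: (1, [::], 3%N, [::]); (-1, [::], 4%N, [::])]].

Definition O2_table : dim_table :=
  DimTable O2_basis O2_reps O2_functionals O2_left_inverse O2_coefs O2_witnesses.

Lemma span_dim_O2_tensor2 : span_dim (orth_rels 2) (@tensor2_entries 2) 10.
Proof. by rewrite orth_rels_ratr; apply: (span_dim_of_table (T := O2_table)); vm_compute. Qed.

Definition B3_basis : seq nat :=
  [:: 0; 1; 2; 3; 4; 9; 10; 12; 13; 20; 21; 27; 28; 36]%N.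

Definition B3_reps : seq (seq (m2 rat)) :=
  [:: [:: M2 (qfrac 5 6) (qfrac 1 3) (qfrac 1 3) (- qfrac 1 6);
          M2 (qfrac 1 3) (- qfrac 1 6) (- qfrac 1 6) (qfrac 1 3);
          M2 (- qfrac 1 6) (- qfrac 1 6) (- qfrac 1 6) (qfrac 5 6);
          M2 (qfrac 1 3) (- qfrac 1 6) (- qfrac 1 6) (qfrac 1 3);
          M2 (- qfrac 1 6) (qfrac 1 3) (qfrac 1 3) (qfrac 5 6);
          M2 (qfrac 5 6) (- qfrac 1 6) (- qfrac 1 6) (- qfrac 1 6);
          M2 (- qfrac 1 6) (- qfrac 1 6) (- qfrac 1 6) (qfrac 5 6);
          M2 (qfrac 5 6) (- qfrac 1 6) (- qfrac 1 6) (- qfrac 1 6);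
          M2 (qfrac 1 3) (qfrac 1 3) (qfrac 1 3) (qfrac 1 3)];
      [:: M2 (qfrac 5 6) (qfrac 1 3) (qfrac 1 3) (- qfrac 1 6);
          M2 (qfrac 1 3) (- qfrac 1 6) (- qfrac 1 6) (qfrac 1 3);
          M2 (- qfrac 1 6) (- qfrac 1 6) (- qfrac 1 6) (qfrac 5 6);
          M2 (- qfrac 1 6) (- qfrac 1 6) (- qfrac 1 6) (qfrac 5 6);
          M2 (qfrac 5 6) (- qfrac 1 6) (- qfrac 1 6) (- qfrac 1 6);
          M2 (qfrac 1 3) (qfrac 1 3) (qfrac 1 3) (qfrac 1 3);
          M2 (qfrac 1 3) (- qfrac 1 6) (- qfrac 1 6) (qfrac 1 3);
          M2 (- qfrac 1 6) (qfrac 1 3) (qfrac 1 3) (qfrac 5 6);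
          M2 (qfrac 5 6) (- qfrac 1 6) (- qfrac 1 6) (- qfrac 1 6)];
      [:: M2 (qfrac 5 6) (qfrac 1 3) (qfrac 1 3) (- qfrac 1 6);
          M2 (- qfrac 1 6) (- qfrac 1 6) (- qfrac 1 6) (qfrac 5 6);
          M2 (qfrac 1 3) (- qfrac 1 6) (- qfrac 1 6) (qfrac 1 3);
          M2 (qfrac 1 3) (- qfrac 1 6) (- qfrac 1 6) (qfrac 1 3);
          M2 (qfrac 5 6) (- qfrac 1 6) (- qfrac 1 6) (- qfrac 1 6);
          M2 (- qfrac 1 6) (qfrac 1 3) (qfrac 1 3) (qfrac 5 6);
          M2 (- qfrac 1 6) (- qfrac 1 6) (- qfrac 1 6) (qfrac 5 6);
          M2 (qfrac 1 3) (qfrac 1 3) (qfrac 1 3) (qfrac 1 3);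
          M2 (qfrac 5 6) (- qfrac 1 6) (- qfrac 1 6) (- qfrac 1 6)];
      [:: M2 (qfrac 1 3) (- qfrac 1 6) (- qfrac 1 6) (qfrac 1 3);
          M2 (- qfrac 1 6) (qfrac 1 3) (qfrac 1 3) (qfrac 5 6);
          M2 (qfrac 5 6) (- qfrac 1 6) (- qfrac 1 6) (- qfrac 1 6);
          M2 (qfrac 5 6) (qfrac 1 3) (qfrac 1 3) (- qfrac 1 6);
          M2 (qfrac 1 3) (- qfrac 1 6) (- qfrac 1 6) (qfrac 1 3);
          M2 (- qfrac 1 6) (- qfrac 1 6) (- qfrac 1 6) (qfrac 5 6);
          M2 (- qfrac 1 6) (- qfrac 1 6) (- qfrac 1 6) (qfrac 5 6);
          M2 (qfrac 5 6) (- qfrac 1 6) (- qfrac 1 6) (- qfrac 1 6);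
          M2 (qfrac 1 3) (qfrac 1 3) (qfrac 1 3) (qfrac 1 3)];
      [:: M2 (qfrac 1 3) (- qfrac 1 6) (- qfrac 1 6) (qfrac 1 3);
          M2 (- qfrac 1 6) (qfrac 1 3) (qfrac 1 3) (qfrac 5 6);
          M2 (qfrac 5 6) (- qfrac 1 6) (- qfrac 1 6) (- qfrac 1 6);
          M2 (- qfrac 1 6) (- qfrac 1 6) (- qfrac 1 6) (qfrac 5 6);
          M2 (qfrac 5 6) (- qfrac 1 6) (- qfrac 1 6) (- qfrac 1 6);
          M2 (qfrac 1 3) (qfrac 1 3) (qfrac 1 3) (qfrac 1 3);
          M2 (qfrac 5 6) (qfrac 1 3) (qfrac 1 3) (- qfrac 1 6);
          M2 (qfrac 1 3) (- qfrac 1 6) (- qfrac 1 6) (qfrac 1 3);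
          M2 (- qfrac 1 6) (- qfrac 1 6) (- qfrac 1 6) (qfrac 5 6)];
      [:: M2 (- qfrac 1 6) (- qfrac 1 6) (- qfrac 1 6) (qfrac 5 6);
          M2 (qfrac 5 6) (qfrac 1 3) (qfrac 1 3) (- qfrac 1 6);
          M2 (qfrac 1 3) (- qfrac 1 6) (- qfrac 1 6) (qfrac 1 3);
          M2 (qfrac 5 6) (- qfrac 1 6) (- qfrac 1 6) (- qfrac 1 6);
          M2 (qfrac 1 3) (- qfrac 1 6) (- qfrac 1 6) (qfrac 1 3);
          M2 (- qfrac 1 6) (qfrac 1 3) (qfrac 1 3) (qfrac 5 6);
          M2 (qfrac 1 3) (qfrac 1 3) (qfrac 1 3) (qfrac 1 3);
          M2 (- qfrac 1 6) (- qfrac 1 6) (- qfrac 1 6) (qfrac 5 6);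
          M2 (qfrac 5 6) (- qfrac 1 6) (- qfrac 1 6) (- qfrac 1 6)]].

Definition B3_functionals : seq (nat * (nat * nat)) :=
  [:: (0, (0, 0)); (0, (0, 1)); (0, (1, 0)); (0, (1, 1)); (1, (0, 0)); (1, (0, 1)); (1, (1, 0));
      (1, (1, 1)); (2, (0, 0)); (2, (0, 1)); (3, (0, 0)); (3, (0, 1)); (4, (0, 0)); (5, (0, 0))]%N.

Definition B3_left_inverse : seq (seq rat) :=
  [:: [:: - qfrac 1 2; qfrac 1 2; qfrac 1 2; qfrac 3 2; - qfrac 1 4; qfrac 13 4; qfrac 13 4; qfrac 1 12;
          - qfrac 1 3; 0; 0; 0; - qfrac 1 2; 1];
      [:: - qfrac 1 2; 2; 5; - qfrac 1 2; - qfrac 1 2; qfrac 1 2; qfrac 9 2; qfrac 7 6; - qfrac 8 3; 0;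
          1; 1; qfrac 2 3; qfrac 4 3];
      [:: - qfrac 3 2; qfrac 9 2; qfrac 9 2; qfrac 1 2; - qfrac 3 2; qfrac 9 2; qfrac 9 2; qfrac 7 6;
          - qfrac 8 3; 0; 1; 0; qfrac 1 3; qfrac 8 3];
      [:: 1; 0; 3; 0; - qfrac 1 2; - qfrac 1 2; - qfrac 1 2; - qfrac 1 2; 0; -4; 1; -1; -1; 0];
      [:: qfrac 3 16; qfrac 11 16; qfrac 11 16; - qfrac 9 16; qfrac 3 16; - qfrac 29 16; - qfrac 13 16;
          qfrac 5 48; qfrac 1 3; -1; - qfrac 1 8; 0; qfrac 5 24; - qfrac 1 3];
      [:: 2; qfrac 1 2; - qfrac 5 2; -2; 1; -2; -6; 0; 0; 0; 0; -1; qfrac 1 3; - qfrac 4 3];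
      [:: 0; -5; -5; 0; qfrac 9 4; - qfrac 1 4; - qfrac 1 4; - qfrac 11 4; 1; 0; 1; 0; - qfrac 1 6;
          - qfrac 1 3];
      [:: qfrac 19 16; qfrac 59 16; qfrac 59 16; - qfrac 25 16; - qfrac 21 16; - qfrac 21 16;
          - qfrac 37 16; qfrac 31 16; -1; -1; - qfrac 1 8; -2; - qfrac 1 8; 1];
      [:: - qfrac 3 4; qfrac 13 4; qfrac 13 4; qfrac 9 4; - qfrac 3 4; qfrac 5 4; qfrac 5 4;
          - qfrac 5 12; - qfrac 4 3; 0; qfrac 1 2; 0; - qfrac 5 6; qfrac 4 3];
      [:: qfrac 1 2; qfrac 1 2; qfrac 1 2; qfrac 1 2; - qfrac 1 4; - qfrac 3 4; - qfrac 3 4; qfrac 1 12;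
          - qfrac 1 3; 0; 0; 0; qfrac 5 6; - qfrac 1 3];
      [:: - qfrac 1 2; - qfrac 1 2; - qfrac 1 2; - qfrac 1 2; qfrac 1 2; qfrac 1 2; qfrac 1 2; qfrac 1 2;
          0; 0; 1; 0; -1; 0];
      [:: qfrac 5 4; qfrac 1 4; - qfrac 11 4; - qfrac 3 4; - qfrac 1 4; - qfrac 17 4; - qfrac 17 4;
          - qfrac 7 12; qfrac 4 3; 4; - qfrac 1 2; 1; qfrac 5 6; - qfrac 4 3];
      [:: qfrac 1 16; qfrac 41 16; qfrac 41 16; - qfrac 3 16; - qfrac 23 16; - qfrac 7 16; qfrac 9 16;
          qfrac 79 48; - qfrac 1 3; 1; - qfrac 11 8; 2; qfrac 31 24; qfrac 1 3];
      [:: qfrac 9 16; - qfrac 15 16; - qfrac 15 16; - qfrac 27 16; qfrac 9 16; - qfrac 39 16;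
          - qfrac 55 16; qfrac 5 16; 1; 1; - qfrac 3 8; 0; qfrac 5 8; -1]].

Definition B3_coefs : seq (seq rat) :=
  [:: [:: 1; 0; 0; 0; 0; 0; 0; 0; 0; 0; 0; 0; 0; 0];
      [:: 0; 1; 0; 0; 0; 0; 0; 0; 0; 0; 0; 0; 0; 0];
      [:: 0; 0; 1; 0; 0; 0; 0; 0; 0; 0; 0; 0; 0; 0];
      [:: 0; 0; 0; 1; 0; 0; 0; 0; 0; 0; 0; 0; 0; 0];
      [:: 0; 0; 0; 0; 1; 0; 0; 0; 0; 0; 0; 0; 0; 0];
      [:: 1; 1; 1; -1; -1; 0; 0; 0; 0; 0; 0; 0; 0; 0];
      [:: 0; 1; 1; -1; 0; 0; 0; 0; 0; 0; 0; 0; 0; 0];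
      [:: 1; 0; 1; 0; -1; 0; 0; 0; 0; 0; 0; 0; 0; 0];
      [:: 0; 0; -1; 1; 1; 0; 0; 0; 0; 0; 0; 0; 0; 0];
      [:: 0; 0; 0; 0; 0; 1; 0; 0; 0; 0; 0; 0; 0; 0];
      [:: 0; 0; 0; 0; 0; 0; 1; 0; 0; 0; 0; 0; 0; 0];
      [:: 0; - qfrac 1 2; -1; 0; 0; - qfrac 1 2; 0; 0; 0; 0; 0; 0; 0; 0];
      [:: 0; 0; 0; 0; 0; 0; 0; 1; 0; 0; 0; 0; 0; 0];
      [:: 0; 0; 0; 0; 0; 0; 0; 0; 1; 0; 0; 0; 0; 0];
      [:: 0; - qfrac 1 2; -1; 0; 0; qfrac 1 2; 1; -1; -1; 0; 0; 0; 0; 0];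
      [:: 0; - qfrac 1 2; -1; 0; 0; - qfrac 1 2; 1; -1; 0; 0; 0; 0; 0; 0];
      [:: 0; - qfrac 1 2; -1; 0; 0; qfrac 1 2; 0; 0; -1; 0; 0; 0; 0; 0];
      [:: 0; qfrac 1 2; 1; 0; 0; qfrac 1 2; 0; 1; 1; 0; 0; 0; 0; 0];
      [:: 0; 1; 1; 0; 0; -1; 0; 0; 0; 0; 0; 0; 0; 0];
      [:: 0; - qfrac 3 2; -1; 0; 0; qfrac 1 2; 0; 0; 0; 0; 0; 0; 0; 0];
      [:: 0; 0; 0; 0; 0; 0; 0; 0; 0; 1; 0; 0; 0; 0];
      [:: 0; 0; 0; 0; 0; 0; 0; 0; 0; 0; 1; 0; 0; 0];
      [:: 0; - qfrac 1 2; 0; 1; 0; - qfrac 1 2; 0; 0; 1; 1; -1; 0; 0; 0];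
      [:: 0; 0; 0; -1; 0; 0; 0; 0; -1; 0; 0; 0; 0; 0];
      [:: 0; - qfrac 3 2; -1; 0; 0; qfrac 1 2; 0; 0; 0; 1; -1; 0; 0; 0];
      [:: 0; qfrac 3 2; 1; -1; 0; - qfrac 1 2; 0; 0; -1; 0; 1; 0; 0; 0];
      [:: 0; - qfrac 1 2; 0; 1; 0; - qfrac 1 2; 0; 0; 1; 0; 0; 0; 0; 0];
      [:: 0; 0; 0; 0; 0; 0; 0; 0; 0; 0; 0; 1; 0; 0];
      [:: 0; 0; 0; 0; 0; 0; 0; 0; 0; 0; 0; 0; 1; 0];
      [:: 0; 0; 0; 1; 0; 0; 0; 1; 0; 0; 1; -1; -1; 0];
      [:: 0; 1; 1; qfrac 1 2; 0; 0; 0; 1; 0; 0; 1; - qfrac 1 2; 0; 0];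
      [:: 0; -1; 0; 1; 0; 0; 0; qfrac 1 2; 1; 0; 0; 0; - qfrac 1 2; 0];
      [:: 0; 0; -1; - qfrac 1 2; 0; 0; 0; - qfrac 1 2; -1; 0; 0; qfrac 1 2; qfrac 1 2; 0];
      [:: 0; -1; -1; qfrac 1 2; 0; 0; 0; 0; 0; 0; 0; - qfrac 1 2; 0; 0];
      [:: 0; 1; 0; 0; 0; 0; 0; qfrac 1 2; -1; 0; 1; 0; - qfrac 1 2; 0];
      [:: 0; 0; 1; qfrac 1 2; 0; 0; 0; qfrac 1 2; 1; 0; 0; qfrac 1 2; qfrac 1 2; 0];
      [:: 0; 0; 0; 0; 0; 0; 0; 0; 0; 0; 0; 0; 0; 1];
      [:: 0; 0; 0; 1; qfrac 1 2; 0; 0; qfrac 1 2; 1; 0; 0; -1; - qfrac 1 2; - qfrac 1 2];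
      [:: 0; - qfrac 1 2; 0; 0; qfrac 1 2; - qfrac 1 2; 0; - qfrac 1 2; 1; 1; -1; 1; qfrac 1 2;
          - qfrac 1 2];
      [:: 0; 0; 0; 1; qfrac 1 2; -1; 0; 0; 1; 0; 0; 0; 0; - qfrac 1 2];
      [:: 0; -1; -1; qfrac 1 2; qfrac 3 4; 0; 0; - qfrac 1 4; 1; 1; -1; qfrac 1 2; qfrac 1 4; qfrac 1 4];
      [:: 0; qfrac 1 2; 1; - qfrac 1 2; - qfrac 1 4; qfrac 1 2; 0; qfrac 1 4; 0; 0; 0; - qfrac 1 2;
          - qfrac 1 4; qfrac 1 4];
      [:: 0; - qfrac 1 2; 0; 0; qfrac 1 2; qfrac 1 2; 0; 0; 1; 1; -1; 0; 0; - qfrac 1 2];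
      [:: 0; qfrac 1 2; 1; - qfrac 1 2; - qfrac 1 4; - qfrac 1 2; 0; - qfrac 1 4; 0; 0; 0; qfrac 1 2;
          qfrac 1 4; qfrac 1 4];
      [:: 0; - qfrac 1 2; -1; qfrac 3 2; qfrac 3 4; - qfrac 1 2; 0; qfrac 1 4; 1; 0; 0; - qfrac 1 2;
          - qfrac 1 4; qfrac 1 4];
      [:: 1; 1; 1; 0; 0; 0; 0; 0; 0; 0; 0; -1; 0; -1];
      [:: 0; - qfrac 1 2; -1; -1; - qfrac 1 2; qfrac 1 2; 1; - qfrac 1 2; -1; 0; 0; 1; - qfrac 1 2;
          qfrac 1 2];
      [:: 0; 0; 0; -1; - qfrac 1 2; 0; 0; - qfrac 1 2; -1; 0; 0; 0; qfrac 1 2; qfrac 1 2];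
      [:: 0; -1; -1; - qfrac 1 2; - qfrac 1 2; 1; 0; 0; -1; 0; 0; qfrac 1 2; 0; qfrac 1 2];
      [:: 0; qfrac 3 2; 1; - qfrac 1 2; qfrac 1 4; - qfrac 1 2; 0; - qfrac 1 4; 0; 0; 0; - qfrac 1 2;
          qfrac 1 4; - qfrac 1 4];
      [:: 1; 0; 0; -1; - qfrac 3 4; 0; 1; - qfrac 3 4; -1; 0; 0; 0; - qfrac 1 4; - qfrac 1 4];
      [:: 0; qfrac 1 2; 0; - qfrac 3 2; - qfrac 1 2; - qfrac 1 2; 1; -1; -1; 0; 0; qfrac 1 2; 0;
          qfrac 1 2];
      [:: 1; - qfrac 1 2; 0; - qfrac 1 2; - qfrac 3 4; qfrac 1 2; 0; - qfrac 1 4; -1; 0; 0;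
          - qfrac 1 2; qfrac 1 4; - qfrac 1 4];
      [:: 0; qfrac 1 2; 0; 0; qfrac 1 4; qfrac 1 2; 0; qfrac 1 4; 0; 0; 0; 0; - qfrac 1 4; - qfrac 1 4];
      [:: 0; 1; 1; 0; 0; 0; 0; 0; 0; 0; 0; -1; 0; 0];
      [:: 0; - qfrac 3 2; -1; 0; 0; qfrac 1 2; 1; 0; 0; 0; 0; 0; -1; 0];
      [:: 0; - qfrac 1 2; -1; -1; 0; - qfrac 1 2; 0; -1; 0; 1; -1; 1; 1; 0];
      [:: 0; -1; -1; - qfrac 1 2; 0; 0; 0; 0; 0; 0; 0; qfrac 1 2; 0; 0];
      [:: 0; qfrac 1 2; 0; 0; 0; - qfrac 1 2; 0; - qfrac 1 2; 1; 1; -1; 0; qfrac 1 2; 0];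
      [:: 0; - qfrac 1 2; 0; - qfrac 1 2; 0; qfrac 1 2; 1; - qfrac 1 2; -1; 0; 0; - qfrac 1 2;
          - qfrac 1 2; 0];
      [:: 0; -1; -1; - qfrac 1 2; 0; 0; 1; -1; 0; 1; -1; qfrac 1 2; 0; 0];
      [:: 0; 0; 0; -1; 0; 0; 0; - qfrac 1 2; -1; 0; 0; 0; qfrac 1 2; 0];
      [:: 0; 0; 0; qfrac 1 2; 0; 0; 0; qfrac 1 2; 1; 0; 0; - qfrac 1 2; - qfrac 1 2; 0];
      [:: 1; 1; 1; 0; 0; -1; 0; 0; 0; 0; 0; 0; 0; -1];
      [:: 0; - qfrac 1 2; -1; -1; - qfrac 1 2; qfrac 1 2; 0; - qfrac 1 2; -1; 0; 0; 1; qfrac 1 2;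
          qfrac 1 2];
      [:: 0; qfrac 1 2; 1; 0; - qfrac 1 2; qfrac 1 2; 0; qfrac 1 2; -1; 0; 1; -1; - qfrac 1 2;
          qfrac 1 2];
      [:: 0; 0; 0; 0; - qfrac 1 2; 1; 0; 0; -1; 0; 1; 0; 0; qfrac 1 2];
      [:: 0; qfrac 1 2; 1; qfrac 1 2; qfrac 1 4; - qfrac 1 2; 0; qfrac 1 4; 0; 0; 0; - qfrac 1 2;
          - qfrac 1 4; - qfrac 1 4];
      [:: 1; qfrac 1 2; 0; - qfrac 3 2; - qfrac 3 4; - qfrac 1 2; 0; - qfrac 1 4; -1; 0; 0; qfrac 1 2;
          qfrac 1 4; - qfrac 1 4];
      [:: 0; 0; 0; -1; - qfrac 1 2; 0; 0; 0; -1; 0; 0; 0; 0; qfrac 1 2];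
      [:: 1; 1; 1; - qfrac 1 2; - qfrac 3 4; 0; 0; qfrac 1 4; -1; 0; 1; - qfrac 1 2; - qfrac 1 4;
          - qfrac 1 4];
      [:: 0; 0; 0; qfrac 1 2; qfrac 1 4; 0; 0; - qfrac 1 4; 0; 0; 0; qfrac 1 2; qfrac 1 4; - qfrac 1 4];
      [:: 0; -1; -1; 0; 0; 1; 0; 0; 0; 0; 0; 1; 0; 1];
      [:: 0; qfrac 3 2; 1; 1; qfrac 1 2; - qfrac 1 2; 0; qfrac 1 2; 1; 0; 0; -1; qfrac 1 2; - qfrac 1 2];
      [:: 0; - qfrac 1 2; 0; 1; qfrac 1 2; - qfrac 1 2; 0; qfrac 1 2; 1; 0; 0; 0; - qfrac 1 2;
          - qfrac 1 2];
      [:: 0; 1; 1; qfrac 3 2; qfrac 1 2; -1; 0; 1; 1; 0; 0; - qfrac 1 2; 0; - qfrac 1 2];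
      [:: 0; - qfrac 3 2; -1; qfrac 1 2; qfrac 3 4; qfrac 1 2; 0; qfrac 1 4; 1; 0; 0; qfrac 1 2;
          - qfrac 1 4; qfrac 1 4];
      [:: 0; qfrac 1 2; 0; 0; - qfrac 1 4; qfrac 1 2; 0; - qfrac 1 4; 0; 0; 0; 0; qfrac 1 4; qfrac 1 4];
      [:: 0; 0; 0; qfrac 1 2; qfrac 1 2; 0; 0; 0; 1; 0; 0; - qfrac 1 2; 0; - qfrac 1 2];
      [:: 0; 0; 0; qfrac 1 2; - qfrac 1 4; 0; 0; qfrac 1 4; 0; 0; 0; qfrac 1 2; - qfrac 1 4; qfrac 1 4];
      [:: 0; 0; 0; 1; qfrac 3 4; 0; 0; qfrac 3 4; 1; 0; 0; 0; qfrac 1 4; qfrac 1 4]].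

Definition B3_witnesses : seq (seq (rat * seq nat * nat * seq nat)) :=
  [:: [::];
      [::];
      [::];
      [::];
      [::];
      [:: (-1, [:: 0], 18%N, [::]); (1, [:: 0], 19%N, [::])];
      [:: (-1, [:: 0], 18%N, [::]); (1, [:: 0], 21%N, [::])];
      [:: (-1, [:: 0], 18%N, [::]); (1, [:: 0], 22%N, [::])];
      [:: (1, [:: 0], 18%N, [::]); (-1, [:: 0], 21%N, [::]); (1, [:: 0], 20%N, [::]);
          (-1, [:: 0], 22%N, [::])];
      [::];
      [::];
      [:: (- qfrac 1 2, [::], 0%N, [::]); (qfrac 1 2, [::], 18%N, [::]); (1, [:: 0], 18%N, [::]);
          (- qfrac 1 2, [::], 18%N, [:: 0]); (qfrac 1 2, [:: 2], 18%N, [::]);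
          (1, [:: 1], 18%N, [::]); (- qfrac 1 2, [::], 18%N, [:: 1])];
      [::];
      [::];
      [:: (- qfrac 1 2, [::], 0%N, [::]); (qfrac 1 2, [::], 18%N, [::]); (1, [:: 0], 18%N, [::]);
          (- qfrac 1 2, [::], 18%N, [:: 0]); (qfrac 1 2, [:: 2], 18%N, [::]);
          (1, [:: 1], 19%N, [::]); (- qfrac 1 2, [::], 18%N, [:: 1])];
      [:: (- qfrac 1 2, [::], 0%N, [::]); (qfrac 1 2, [::], 18%N, [::]); (1, [:: 0], 18%N, [::]);
          (- qfrac 1 2, [::], 18%N, [:: 0]); (qfrac 1 2, [:: 2], 18%N, [::]);
          (- qfrac 1 2, [::], 18%N, [:: 1]); (1, [:: 1], 21%N, [::])];
      [:: (qfrac 1 2, [:: 0], 20%N, [::]); (qfrac 1 2, [::], 2%N, [::]);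
          (qfrac 1 2, [:: 0], 18%N, [::]); (qfrac 1 2, [::], 9%N, [::]);
          (qfrac 1 2, [::], 10%N, [::]); (qfrac 1 2, [::], 11%N, [::]);
          (qfrac 1 2, [::], 12%N, [::]); (qfrac 1 2, [::], 13%N, [::]);
          (- qfrac 1 2, [:: 1], 18%N, [::]); (qfrac 1 2, [::], 14%N, [::]);
          (- qfrac 1 2, [::], 18%N, [:: 8]); (- qfrac 1 2, [::], 19%N, [::]);
          (- qfrac 1 2, [:: 3], 19%N, [::]); (- qfrac 1 2, [:: 4], 19%N, [::]);
          (- qfrac 1 2, [:: 6], 20%N, [::]); (- qfrac 1 2, [::], 20%N, [::]);
          (qfrac 1 2, [::], 1%N, [::]); (qfrac 1 2, [:: 0], 19%N, [::]);
          (- qfrac 1 2, [::], 18%N, [:: 5]); (-1, [:: 0], 21%N, [::]);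
          (qfrac 1 2, [:: 1], 19%N, [::]); (- qfrac 1 2, [:: 7], 20%N, [::]);
          (- qfrac 1 2, [:: 1], 21%N, [::]); (qfrac 1 2, [:: 1], 20%N, [::]);
          (- qfrac 1 2, [:: 0], 22%N, [::])];
      [:: (- qfrac 1 2, [::], 1%N, [::]); (qfrac 1 2, [::], 19%N, [::]);
          (- qfrac 1 2, [:: 0], 19%N, [::]); (- qfrac 1 2, [:: 0], 18%N, [::]);
          (- qfrac 1 2, [::], 9%N, [::]); (- qfrac 1 2, [::], 10%N, [::]);
          (- qfrac 1 2, [::], 11%N, [::]); (- qfrac 1 2, [::], 12%N, [::]);
          (- qfrac 1 2, [::], 13%N, [::]); (qfrac 1 2, [:: 1], 18%N, [::]);
          (- qfrac 1 2, [::], 14%N, [::]); (qfrac 1 2, [::], 18%N, [:: 5]);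
          (qfrac 1 2, [:: 3], 19%N, [::]); (qfrac 1 2, [:: 4], 19%N, [::]);
          (1, [:: 0], 21%N, [::]); (- qfrac 1 2, [::], 2%N, [::]);
          (- qfrac 1 2, [:: 0], 20%N, [::]); (qfrac 1 2, [::], 18%N, [:: 8]);
          (qfrac 1 2, [:: 6], 20%N, [::]); (qfrac 1 2, [::], 20%N, [::]);
          (qfrac 1 2, [:: 7], 20%N, [::]); (- qfrac 1 2, [:: 1], 19%N, [::]);
          (- qfrac 1 2, [:: 1], 21%N, [::]); (qfrac 1 2, [:: 1], 20%N, [::]);
          (qfrac 1 2, [:: 0], 22%N, [::])];
      [:: (-1, [:: 0], 18%N, [::]); (1, [::], 18%N, [:: 0])];
      [:: (qfrac 1 2, [::], 18%N, [::]); (- qfrac 1 2, [::], 0%N, [::]); (1, [:: 0], 18%N, [::]);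
          (qfrac 1 2, [::], 18%N, [:: 1]); (- qfrac 1 2, [::], 18%N, [:: 0]);
          (qfrac 1 2, [:: 2], 18%N, [::])];
      [::];
      [::];
      [:: (- qfrac 1 2, [::], 0%N, [::]); (- qfrac 1 2, [::], 18%N, [::]);
          (qfrac 1 2, [::], 18%N, [:: 0]); (1, [::], 18%N, [:: 3]); (-1, [::], 1%N, [::]);
          (1, [::], 19%N, [::]); (-1, [:: 0], 19%N, [::]); (- qfrac 1 2, [:: 2], 18%N, [::]);
          (1, [::], 18%N, [:: 4]); (1, [::], 18%N, [:: 5]); (-1, [:: 1], 19%N, [::]);
          (qfrac 1 2, [::], 18%N, [:: 1])];
      [:: (1, [::], 1%N, [::])];
      [:: (- qfrac 1 2, [::], 0%N, [::]); (1, [::], 9%N, [::]); (1, [::], 10%N, [::]);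
          (1, [::], 11%N, [::]); (- qfrac 1 2, [::], 18%N, [::]); (qfrac 1 2, [::], 18%N, [:: 0]);
          (- qfrac 1 2, [:: 2], 18%N, [::]); (1, [::], 18%N, [:: 6]); (-1, [:: 3], 19%N, [::]);
          (qfrac 1 2, [::], 18%N, [:: 1]); (-1, [:: 6], 20%N, [::]); (-1, [:: 0], 21%N, [::]);
          (1, [::], 18%N, [:: 3]); (-1, [:: 1], 21%N, [::])];
      [:: (1, [::], 18%N, [:: 7]); (qfrac 1 2, [::], 13%N, [::]); (- qfrac 1 2, [::], 9%N, [::]);
          (- qfrac 1 2, [:: 1], 18%N, [::]); (qfrac 1 2, [::], 12%N, [::]);
          (qfrac 1 2, [::], 14%N, [::]); (- qfrac 1 2, [:: 0], 18%N, [::]);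
          (- qfrac 1 2, [::], 10%N, [::]); (- qfrac 1 2, [::], 11%N, [::]);
          (- qfrac 1 2, [::], 19%N, [::]); (qfrac 1 2, [:: 3], 19%N, [::]);
          (- qfrac 1 2, [:: 4], 19%N, [::]); (- qfrac 1 2, [:: 0], 20%N, [::]);
          (- qfrac 1 2, [::], 2%N, [::]); (qfrac 1 2, [::], 18%N, [:: 8]);
          (- qfrac 1 2, [:: 7], 20%N, [::]); (qfrac 1 2, [:: 6], 20%N, [::]);
          (qfrac 1 2, [::], 20%N, [::]); (qfrac 1 2, [::], 1%N, [::]);
          (qfrac 1 2, [:: 0], 19%N, [::]); (- qfrac 1 2, [::], 18%N, [:: 5]);
          (1, [:: 0], 21%N, [::]); (-1, [::], 18%N, [:: 3]); (qfrac 1 2, [:: 1], 19%N, [::]);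
          (qfrac 1 2, [:: 1], 21%N, [::]); (- qfrac 1 2, [:: 1], 20%N, [::]);
          (- qfrac 1 2, [:: 0], 22%N, [::])];
      [:: (- qfrac 1 2, [::], 13%N, [::]); (- qfrac 1 2, [::], 9%N, [::]);
          (qfrac 1 2, [:: 1], 18%N, [::]); (- qfrac 1 2, [::], 12%N, [::]);
          (- qfrac 1 2, [::], 14%N, [::]); (qfrac 1 2, [:: 0], 18%N, [::]);
          (- qfrac 1 2, [::], 10%N, [::]); (- qfrac 1 2, [::], 11%N, [::]);
          (- qfrac 1 2, [::], 1%N, [::]); (- qfrac 1 2, [:: 0], 19%N, [::]);
          (qfrac 1 2, [::], 18%N, [:: 5]); (- qfrac 1 2, [:: 1], 19%N, [::]);
          (qfrac 1 2, [::], 19%N, [::]); (qfrac 1 2, [:: 3], 19%N, [::]);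
          (qfrac 1 2, [:: 4], 19%N, [::]); (qfrac 1 2, [:: 6], 20%N, [::]);
          (qfrac 1 2, [::], 20%N, [::]); (qfrac 1 2, [:: 7], 20%N, [::]);
          (qfrac 1 2, [::], 2%N, [::]); (- qfrac 1 2, [:: 0], 20%N, [::]);
          (qfrac 1 2, [::], 18%N, [:: 8]); (qfrac 1 2, [:: 1], 21%N, [::]);
          (- qfrac 1 2, [:: 1], 20%N, [::]); (qfrac 1 2, [:: 0], 22%N, [::])];
      [::];
      [::];
      [:: (1, [:: 3], 18%N, [::]); (-1, [::], 18%N, [:: 3])];
      [:: (- qfrac 1 2, [:: 0], 18%N, [::]); (- qfrac 1 2, [::], 10%N, [::]);
          (- qfrac 1 2, [::], 11%N, [::]); (qfrac 1 2, [:: 3], 19%N, [::]);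
          (qfrac 1 2, [:: 6], 20%N, [::]); (qfrac 1 2, [::], 21%N, [:: 0]);
          (- qfrac 1 2, [:: 6], 21%N, [::]); (-1, [::], 18%N, [:: 3]);
          (qfrac 1 2, [::], 21%N, [:: 3])];
      [:: (- qfrac 1 2, [::], 12%N, [::]); (qfrac 1 2, [::], 10%N, [::]);
          (- qfrac 1 2, [::], 13%N, [::]); (qfrac 1 2, [:: 1], 18%N, [::]);
          (- qfrac 1 2, [::], 14%N, [::]); (qfrac 1 2, [::], 19%N, [::]);
          (qfrac 1 2, [:: 4], 19%N, [::]); (qfrac 1 2, [:: 0], 22%N, [::]);
          (- qfrac 1 2, [:: 0], 19%N, [::]); (- qfrac 1 2, [::], 1%N, [::]);
          (qfrac 1 2, [::], 18%N, [:: 5]); (qfrac 1 2, [:: 7], 20%N, [::]);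
          (- qfrac 1 2, [:: 1], 19%N, [::]); (- qfrac 1 2, [::], 21%N, [:: 7]);
          (qfrac 1 2, [:: 3], 22%N, [::])];
      [:: (qfrac 1 2, [::], 13%N, [::]); (qfrac 1 2, [:: 0], 18%N, [::]);
          (qfrac 1 2, [::], 11%N, [::]); (qfrac 1 2, [::], 12%N, [::]);
          (- qfrac 1 2, [:: 1], 18%N, [::]); (qfrac 1 2, [::], 14%N, [::]);
          (qfrac 1 2, [:: 3], 19%N, [::]); (- qfrac 1 2, [::], 19%N, [::]);
          (- qfrac 1 2, [:: 4], 19%N, [::]); (- qfrac 1 2, [::], 21%N, [:: 0]);
          (- qfrac 1 2, [:: 6], 20%N, [::]); (qfrac 1 2, [:: 6], 21%N, [::]);
          (- qfrac 1 2, [:: 0], 22%N, [::]); (qfrac 1 2, [:: 0], 19%N, [::]);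
          (qfrac 1 2, [::], 1%N, [::]); (- qfrac 1 2, [::], 18%N, [:: 5]);
          (- qfrac 1 2, [:: 7], 20%N, [::]); (qfrac 1 2, [:: 1], 19%N, [::]);
          (- qfrac 1 2, [::], 21%N, [:: 3]); (qfrac 1 2, [::], 21%N, [:: 7]);
          (- qfrac 1 2, [:: 3], 22%N, [::])];
      [:: (qfrac 1 2, [:: 0], 18%N, [::]); (qfrac 1 2, [::], 10%N, [::]);
          (qfrac 1 2, [::], 11%N, [::]); (- qfrac 1 2, [:: 3], 19%N, [::]);
          (- qfrac 1 2, [:: 6], 20%N, [::]); (1, [:: 3], 21%N, [::]);
          (- qfrac 1 2, [::], 21%N, [:: 0]); (qfrac 1 2, [:: 6], 21%N, [::]);
          (- qfrac 1 2, [::], 21%N, [:: 3])];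
      [:: (- qfrac 1 2, [::], 19%N, [::]); (- qfrac 1 2, [::], 10%N, [::]);
          (qfrac 1 2, [::], 12%N, [::]); (qfrac 1 2, [::], 13%N, [::]);
          (- qfrac 1 2, [:: 1], 18%N, [::]); (qfrac 1 2, [::], 14%N, [::]);
          (- qfrac 1 2, [:: 4], 19%N, [::]); (- qfrac 1 2, [:: 7], 20%N, [::]);
          (- qfrac 1 2, [:: 0], 22%N, [::]); (qfrac 1 2, [:: 0], 19%N, [::]);
          (qfrac 1 2, [::], 1%N, [::]); (- qfrac 1 2, [::], 18%N, [:: 5]);
          (-1, [::], 18%N, [:: 3]); (qfrac 1 2, [:: 1], 19%N, [::]);
          (qfrac 1 2, [::], 21%N, [:: 7]); (qfrac 1 2, [:: 3], 22%N, [::])];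
      [:: (qfrac 1 2, [:: 7], 20%N, [::]); (qfrac 1 2, [:: 4], 19%N, [::]);
          (- qfrac 1 2, [::], 13%N, [::]); (qfrac 1 2, [:: 1], 18%N, [::]);
          (- qfrac 1 2, [::], 12%N, [::]); (- qfrac 1 2, [::], 14%N, [::]);
          (- qfrac 1 2, [:: 0], 18%N, [::]); (- qfrac 1 2, [::], 11%N, [::]);
          (qfrac 1 2, [:: 3], 19%N, [::]); (qfrac 1 2, [::], 19%N, [::]);
          (qfrac 1 2, [:: 6], 20%N, [::]); (-1, [:: 3], 21%N, [::]); (1, [:: 3], 20%N, [::]);
          (qfrac 1 2, [::], 21%N, [:: 0]); (- qfrac 1 2, [:: 6], 21%N, [::]);
          (qfrac 1 2, [:: 0], 22%N, [::]); (- qfrac 1 2, [:: 0], 19%N, [::]);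
          (- qfrac 1 2, [::], 1%N, [::]); (qfrac 1 2, [::], 18%N, [:: 5]);
          (- qfrac 1 2, [:: 1], 19%N, [::]); (qfrac 1 2, [::], 21%N, [:: 3]);
          (- qfrac 1 2, [::], 21%N, [:: 7]); (- qfrac 1 2, [:: 3], 22%N, [::])];
      [::];
      [:: (qfrac 1 2, [::], 3%N, [::]); (- qfrac 1 2, [:: 5], 18%N, [::]);
          (qfrac 1 2, [::], 19%N, [:: 0]); (qfrac 1 2, [::], 19%N, [:: 1]);
          (- qfrac 1 2, [:: 0], 19%N, [::]); (- qfrac 1 2, [::], 1%N, [::]);
          (qfrac 1 2, [::], 18%N, [:: 5]); (- qfrac 1 2, [:: 1], 19%N, [::])];
      [:: (- qfrac 1 2, [::], 3%N, [::]); (- qfrac 1 2, [::], 0%N, [::]);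
          (- qfrac 1 2, [::], 18%N, [::]); (qfrac 1 2, [::], 18%N, [:: 0]);
          (- qfrac 1 2, [:: 2], 18%N, [::]); (1, [::], 19%N, [::]); (1, [:: 4], 18%N, [::]);
          (qfrac 1 2, [:: 5], 18%N, [::]); (- qfrac 1 2, [::], 19%N, [:: 0]);
          (qfrac 1 2, [::], 18%N, [:: 1]); (- qfrac 1 2, [::], 19%N, [:: 1]);
          (- qfrac 1 2, [:: 0], 19%N, [::]); (- qfrac 1 2, [::], 1%N, [::]);
          (qfrac 1 2, [::], 18%N, [:: 5]); (1, [::], 18%N, [:: 3]);
          (- qfrac 1 2, [:: 1], 19%N, [::])];
      [:: (- qfrac 1 2, [::], 13%N, [::]); (qfrac 1 2, [:: 1], 18%N, [::]);
          (- qfrac 1 2, [::], 14%N, [::]); (qfrac 1 2, [:: 4], 19%N, [::]);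
          (qfrac 1 2, [::], 19%N, [::]); (- qfrac 1 2, [:: 0], 19%N, [::]);
          (- qfrac 1 2, [::], 1%N, [::]); (qfrac 1 2, [::], 18%N, [:: 5]);
          (qfrac 1 2, [:: 7], 20%N, [::]); (- qfrac 1 2, [:: 1], 19%N, [::]);
          (qfrac 1 2, [::], 22%N, [:: 0]); (- qfrac 1 2, [:: 7], 21%N, [::]);
          (qfrac 1 2, [::], 22%N, [:: 3])];
      [:: (- qfrac 1 2, [::], 18%N, [::]); (- qfrac 1 2, [::], 0%N, [::]);
          (qfrac 1 2, [::], 4%N, [::]); (qfrac 1 2, [:: 0], 18%N, [::]);
          (qfrac 1 4, [::], 10%N, [::]); (qfrac 1 2, [::], 11%N, [::]);
          (qfrac 1 2, [::], 18%N, [:: 0]); (qfrac 1 4, [::], 12%N, [::]);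
          (- qfrac 1 2, [:: 2], 18%N, [::]); (qfrac 1 2, [::], 13%N, [::]);
          (- qfrac 1 2, [:: 1], 18%N, [::]); (qfrac 1 2, [::], 14%N, [::]);
          (- qfrac 1 2, [:: 3], 19%N, [::]); (qfrac 1 2, [::], 19%N, [:: 3]);
          (- qfrac 1 2, [:: 5], 19%N, [::]); (- qfrac 1 2, [:: 4], 19%N, [::]);
          (- qfrac 1 2, [:: 6], 20%N, [::]); (- qfrac 1 2, [::], 21%N, [:: 0]);
          (qfrac 1 2, [:: 6], 21%N, [::]); (- qfrac 1 4, [::], 22%N, [:: 0]);
          (- qfrac 1 2, [:: 7], 20%N, [::]); (qfrac 1 2, [::], 18%N, [:: 1]);
          (qfrac 1 4, [:: 7], 21%N, [::]); (- qfrac 1 4, [:: 0], 22%N, [::]);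
          (- qfrac 1 2, [:: 0], 19%N, [::]); (- qfrac 1 2, [::], 1%N, [::]);
          (qfrac 1 2, [::], 18%N, [:: 5]); (1, [::], 18%N, [:: 3]);
          (- qfrac 1 2, [:: 1], 19%N, [::]); (qfrac 1 2, [::], 19%N, [:: 4]);
          (- qfrac 1 2, [::], 21%N, [:: 3]); (qfrac 1 4, [::], 21%N, [:: 7]);
          (- qfrac 1 4, [::], 22%N, [:: 3]); (- qfrac 1 4, [:: 3], 22%N, [::])];
      [:: (- qfrac 1 2, [::], 4%N, [::]); (qfrac 1 2, [::], 19%N, [::]);
          (- qfrac 1 2, [:: 0], 18%N, [::]); (- qfrac 1 4, [::], 10%N, [::]);
          (- qfrac 1 2, [::], 11%N, [::]); (- qfrac 1 4, [::], 12%N, [::]);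
          (qfrac 1 2, [:: 3], 19%N, [::]); (- qfrac 1 2, [::], 19%N, [:: 3]);
          (qfrac 1 2, [:: 5], 19%N, [::]); (1, [:: 4], 19%N, [::]);
          (qfrac 1 2, [::], 21%N, [:: 0]); (qfrac 1 2, [:: 6], 20%N, [::]);
          (- qfrac 1 2, [:: 6], 21%N, [::]); (qfrac 1 4, [:: 0], 22%N, [::]);
          (- qfrac 1 2, [::], 19%N, [:: 4]); (qfrac 1 2, [::], 21%N, [:: 3]);
          (- qfrac 1 4, [::], 21%N, [:: 7]); (- qfrac 1 4, [::], 22%N, [:: 0]);
          (qfrac 1 4, [:: 7], 21%N, [::]); (qfrac 1 4, [:: 3], 22%N, [::]);
          (- qfrac 1 4, [::], 22%N, [:: 3])];
      [:: (- qfrac 1 2, [::], 0%N, [::]); (qfrac 1 2, [::], 19%N, [::]);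
          (- qfrac 1 2, [::], 18%N, [::]); (qfrac 1 2, [::], 18%N, [:: 0]);
          (- qfrac 1 2, [:: 2], 18%N, [::]); (qfrac 1 2, [::], 13%N, [::]);
          (- qfrac 1 2, [:: 1], 18%N, [::]); (qfrac 1 2, [::], 14%N, [::]);
          (- qfrac 1 2, [:: 4], 19%N, [::]); (qfrac 1 2, [::], 18%N, [:: 1]);
          (- qfrac 1 2, [:: 0], 19%N, [::]); (- qfrac 1 2, [::], 1%N, [::]);
          (qfrac 1 2, [::], 18%N, [:: 5]); (- qfrac 1 2, [:: 7], 20%N, [::]);
          (1, [::], 18%N, [:: 3]); (- qfrac 1 2, [:: 1], 19%N, [::]);
          (- qfrac 1 2, [::], 22%N, [:: 0]); (1, [:: 4], 21%N, [::]);
          (qfrac 1 2, [:: 7], 21%N, [::]); (- qfrac 1 2, [::], 22%N, [:: 3])];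
      [:: (qfrac 1 2, [:: 3], 20%N, [::]); (qfrac 1 2, [::], 5%N, [::]); (-1, [:: 0], 18%N, [::]);
          (qfrac 1 2, [::], 9%N, [::]); (qfrac 1 4, [::], 10%N, [::]);
          (qfrac 1 4, [::], 12%N, [::]); (- qfrac 1 2, [::], 19%N, [:: 8]);
          (- qfrac 1 2, [::], 20%N, [::]); (-1, [:: 3], 21%N, [::]);
          (qfrac 1 2, [::], 21%N, [:: 0]); (- qfrac 1 2, [:: 6], 21%N, [::]);
          (qfrac 1 4, [:: 0], 22%N, [::]); (qfrac 1 2, [::], 21%N, [:: 3]);
          (- qfrac 1 4, [::], 21%N, [:: 7]); (qfrac 1 4, [::], 22%N, [:: 0]);
          (- qfrac 1 2, [:: 4], 21%N, [::]); (qfrac 1 2, [:: 4], 20%N, [::]);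
          (- qfrac 1 4, [:: 7], 21%N, [::]); (qfrac 1 4, [::], 22%N, [:: 3]);
          (- qfrac 1 4, [:: 3], 22%N, [::])];
      [:: (- qfrac 1 2, [::], 9%N, [::]); (1, [:: 0], 18%N, [::]); (- qfrac 1 4, [::], 10%N, [::]);
          (- qfrac 1 4, [::], 12%N, [::]); (- qfrac 1 2, [::], 13%N, [::]);
          (qfrac 1 2, [:: 1], 18%N, [::]); (- qfrac 1 2, [::], 14%N, [::]);
          (qfrac 1 2, [::], 19%N, [::]); (qfrac 1 2, [:: 4], 19%N, [::]);
          (qfrac 1 2, [::], 20%N, [::]); (1, [:: 3], 21%N, [::]); (- qfrac 1 2, [::], 5%N, [::]);
          (- qfrac 1 2, [:: 3], 20%N, [::]); (qfrac 1 2, [::], 19%N, [:: 8]);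
          (- qfrac 1 2, [::], 21%N, [:: 0]); (qfrac 1 2, [:: 6], 21%N, [::]);
          (- qfrac 1 4, [:: 0], 22%N, [::]); (- qfrac 1 2, [:: 0], 19%N, [::]);
          (- qfrac 1 2, [::], 1%N, [::]); (qfrac 1 2, [::], 18%N, [:: 5]);
          (qfrac 1 2, [:: 7], 20%N, [::]); (- qfrac 1 2, [:: 1], 19%N, [::]);
          (- qfrac 1 2, [::], 21%N, [:: 3]); (qfrac 1 4, [::], 21%N, [:: 7]);
          (qfrac 1 4, [::], 22%N, [:: 0]); (- qfrac 1 2, [:: 4], 21%N, [::]);
          (qfrac 1 2, [:: 4], 20%N, [::]); (- qfrac 1 4, [:: 7], 21%N, [::]);
          (qfrac 1 4, [::], 22%N, [:: 3]); (qfrac 1 4, [:: 3], 22%N, [::])];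
      [:: (-1, [:: 0], 18%N, [::]); (1, [::], 19%N, [:: 0])];
      [:: (1, [:: 0], 18%N, [::]); (- qfrac 1 2, [::], 0%N, [::]); (qfrac 1 2, [::], 18%N, [::]);
          (- qfrac 1 2, [::], 18%N, [:: 0]); (- qfrac 1 2, [::], 18%N, [:: 1]);
          (- qfrac 1 2, [::], 3%N, [::]); (qfrac 1 2, [:: 5], 18%N, [::]);
          (- qfrac 1 2, [::], 19%N, [:: 0]); (qfrac 1 2, [:: 2], 18%N, [::]);
          (qfrac 1 2, [::], 19%N, [:: 1]); (qfrac 1 2, [:: 0], 19%N, [::]);
          (qfrac 1 2, [::], 1%N, [::]); (- qfrac 1 2, [::], 18%N, [:: 5]);
          (qfrac 1 2, [:: 1], 19%N, [::])];
      [:: (qfrac 1 2, [::], 3%N, [::]); (qfrac 1 2, [:: 5], 18%N, [::]);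
          (- qfrac 1 2, [::], 19%N, [:: 0]); (- qfrac 1 2, [::], 19%N, [:: 1]);
          (qfrac 1 2, [:: 0], 19%N, [::]); (qfrac 1 2, [::], 1%N, [::]);
          (- qfrac 1 2, [::], 18%N, [:: 5]); (qfrac 1 2, [:: 1], 19%N, [::])];
      [:: (qfrac 1 2, [:: 0], 18%N, [::]); (qfrac 1 2, [::], 10%N, [::]);
          (qfrac 1 2, [::], 11%N, [::]); (- qfrac 1 2, [:: 1], 18%N, [::]);
          (qfrac 1 2, [::], 13%N, [::]); (qfrac 1 2, [::], 14%N, [::]);
          (- qfrac 1 2, [:: 3], 19%N, [::]); (- qfrac 1 2, [::], 19%N, [::]);
          (1, [::], 19%N, [:: 3]); (- qfrac 1 2, [:: 4], 19%N, [::]);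
          (qfrac 1 2, [:: 0], 19%N, [::]); (qfrac 1 2, [::], 1%N, [::]);
          (- qfrac 1 2, [::], 18%N, [:: 5]); (- qfrac 1 2, [:: 7], 20%N, [::]);
          (- qfrac 1 2, [:: 6], 20%N, [::]); (qfrac 1 2, [:: 1], 19%N, [::]);
          (- qfrac 1 2, [::], 21%N, [:: 0]); (- qfrac 1 2, [::], 21%N, [:: 3]);
          (qfrac 1 2, [:: 6], 21%N, [::]); (- qfrac 1 2, [::], 22%N, [:: 0]);
          (qfrac 1 2, [:: 7], 21%N, [::]); (- qfrac 1 2, [::], 22%N, [:: 3])];
      [:: (- qfrac 1 4, [:: 0], 22%N, [::]); (- qfrac 3 4, [::], 10%N, [::]);
          (- qfrac 1 2, [::], 4%N, [::]); (- qfrac 1 2, [:: 0], 18%N, [::]);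
          (- qfrac 1 2, [::], 11%N, [::]); (qfrac 1 4, [::], 12%N, [::]);
          (qfrac 1 2, [:: 3], 19%N, [::]); (qfrac 1 2, [::], 19%N, [::]);
          (- qfrac 1 2, [::], 19%N, [:: 3]); (qfrac 1 2, [:: 5], 19%N, [::]);
          (qfrac 1 2, [:: 6], 20%N, [::]); (qfrac 1 2, [::], 19%N, [:: 4]);
          (qfrac 1 2, [::], 21%N, [:: 0]); (qfrac 1 2, [::], 21%N, [:: 3]);
          (qfrac 1 4, [::], 21%N, [:: 7]); (- qfrac 1 2, [:: 6], 21%N, [::]);
          (qfrac 1 4, [::], 22%N, [:: 0]); (- qfrac 1 4, [:: 7], 21%N, [::]);
          (- qfrac 1 4, [:: 3], 22%N, [::]); (qfrac 1 4, [::], 22%N, [:: 3])];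
      [:: (qfrac 1 4, [::], 22%N, [:: 0]); (- qfrac 1 4, [::], 12%N, [::]);
          (qfrac 1 2, [::], 18%N, [::]); (- qfrac 1 2, [::], 0%N, [::]);
          (qfrac 1 2, [::], 4%N, [::]); (qfrac 1 4, [::], 10%N, [::]);
          (- qfrac 1 2, [::], 18%N, [:: 0]); (qfrac 1 2, [:: 2], 18%N, [::]);
          (- qfrac 1 2, [::], 13%N, [::]); (qfrac 1 2, [:: 1], 18%N, [::]);
          (- qfrac 1 2, [::], 14%N, [::]); (- qfrac 1 2, [::], 19%N, [:: 3]);
          (qfrac 1 2, [:: 4], 19%N, [::]); (qfrac 1 2, [:: 5], 19%N, [::]);
          (qfrac 1 2, [:: 7], 20%N, [::]); (- qfrac 1 2, [::], 18%N, [:: 1]);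
          (- qfrac 1 4, [:: 7], 21%N, [::]); (qfrac 1 4, [:: 0], 22%N, [::]);
          (qfrac 1 2, [:: 0], 19%N, [::]); (qfrac 1 2, [::], 1%N, [::]);
          (- qfrac 1 2, [::], 18%N, [:: 5]); (qfrac 1 2, [:: 1], 19%N, [::]);
          (- qfrac 1 2, [::], 19%N, [:: 4]); (- qfrac 1 4, [::], 21%N, [:: 7]);
          (qfrac 1 4, [::], 22%N, [:: 3]); (qfrac 1 4, [:: 3], 22%N, [::])];
      [:: (qfrac 1 2, [::], 18%N, [::]); (- qfrac 1 2, [::], 0%N, [::]);
          (- qfrac 1 2, [:: 0], 18%N, [::]); (1, [::], 9%N, [::]); (qfrac 1 2, [::], 10%N, [::]);
          (qfrac 1 2, [::], 11%N, [::]); (- qfrac 1 2, [::], 18%N, [:: 0]);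
          (qfrac 1 2, [:: 2], 18%N, [::]); (- qfrac 1 2, [::], 13%N, [::]);
          (qfrac 1 2, [:: 1], 18%N, [::]); (- qfrac 1 2, [::], 14%N, [::]);
          (- qfrac 1 2, [:: 3], 19%N, [::]); (- qfrac 1 2, [::], 19%N, [::]);
          (qfrac 1 2, [:: 4], 19%N, [::]); (1, [::], 19%N, [:: 6]);
          (- qfrac 1 2, [::], 18%N, [:: 1]); (-1, [:: 3], 21%N, [::]);
          (qfrac 1 2, [::], 21%N, [:: 0]); (- qfrac 1 2, [:: 6], 20%N, [::]);
          (- qfrac 1 2, [:: 6], 21%N, [::]); (qfrac 1 2, [:: 0], 19%N, [::]);
          (qfrac 1 2, [::], 1%N, [::]); (- qfrac 1 2, [::], 18%N, [:: 5]);
          (qfrac 1 2, [:: 7], 20%N, [::]); (qfrac 1 2, [:: 1], 19%N, [::]);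
          (qfrac 1 2, [::], 21%N, [:: 3]); (qfrac 1 2, [::], 22%N, [:: 0]);
          (-1, [:: 4], 21%N, [::]); (- qfrac 1 2, [:: 7], 21%N, [::]);
          (qfrac 1 2, [::], 22%N, [:: 3])];
      [:: (qfrac 1 4, [::], 10%N, [::]); (- qfrac 1 2, [::], 9%N, [::]);
          (qfrac 1 4, [::], 12%N, [::]); (qfrac 1 2, [::], 13%N, [::]);
          (- qfrac 1 2, [:: 1], 18%N, [::]); (qfrac 1 2, [::], 14%N, [::]);
          (qfrac 1 2, [::], 20%N, [::]); (- qfrac 1 2, [::], 19%N, [::]);
          (- qfrac 1 2, [:: 4], 19%N, [::]); (1, [:: 3], 21%N, [::]);
          (- qfrac 1 2, [::], 5%N, [::]); (- qfrac 1 2, [:: 3], 20%N, [::]);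
          (1, [::], 19%N, [:: 7]); (qfrac 1 2, [::], 19%N, [:: 8]);
          (- qfrac 1 2, [::], 21%N, [:: 0]); (qfrac 1 2, [:: 6], 21%N, [::]);
          (qfrac 1 4, [:: 0], 22%N, [::]); (qfrac 1 2, [:: 0], 19%N, [::]);
          (qfrac 1 2, [::], 1%N, [::]); (- qfrac 1 2, [::], 18%N, [:: 5]);
          (- qfrac 1 2, [:: 7], 20%N, [::]); (qfrac 1 2, [:: 1], 19%N, [::]);
          (- qfrac 1 2, [::], 21%N, [:: 3]); (- qfrac 1 4, [::], 21%N, [:: 7]);
          (- qfrac 1 4, [::], 22%N, [:: 0]); (qfrac 1 2, [:: 4], 21%N, [::]);
          (- qfrac 1 2, [:: 4], 20%N, [::]); (qfrac 1 4, [:: 7], 21%N, [::]);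
          (- qfrac 1 4, [::], 22%N, [:: 3]); (- qfrac 1 4, [:: 3], 22%N, [::])];
      [:: (- qfrac 1 4, [::], 12%N, [::]); (- qfrac 1 2, [::], 9%N, [::]);
          (qfrac 1 2, [:: 0], 18%N, [::]); (- qfrac 3 4, [::], 10%N, [::]);
          (- qfrac 1 2, [::], 11%N, [::]); (qfrac 1 2, [::], 20%N, [::]);
          (qfrac 1 2, [:: 3], 19%N, [::]); (qfrac 1 2, [::], 5%N, [::]);
          (- qfrac 1 2, [:: 3], 20%N, [::]); (qfrac 1 2, [::], 19%N, [:: 8]);
          (qfrac 1 2, [:: 6], 20%N, [::]); (- qfrac 1 4, [:: 0], 22%N, [::]);
          (qfrac 1 4, [::], 21%N, [:: 7]); (- qfrac 1 4, [::], 22%N, [:: 0]);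
          (qfrac 1 2, [:: 4], 21%N, [::]); (- qfrac 1 2, [:: 4], 20%N, [::]);
          (qfrac 1 4, [:: 7], 21%N, [::]); (- qfrac 1 4, [::], 22%N, [:: 3]);
          (qfrac 1 4, [:: 3], 22%N, [::])];
      [:: (-1, [:: 0], 18%N, [::]); (1, [::], 21%N, [:: 0])];
      [:: (- qfrac 1 2, [::], 0%N, [::]); (qfrac 1 2, [::], 18%N, [::]); (1, [:: 0], 18%N, [::]);
          (- qfrac 1 2, [::], 18%N, [:: 0]); (qfrac 1 2, [:: 2], 18%N, [::]);
          (- qfrac 1 2, [::], 18%N, [:: 1]); (1, [::], 21%N, [:: 1])];
      [:: (- qfrac 1 2, [::], 18%N, [::]); (- qfrac 1 2, [::], 0%N, [::]); (1, [::], 9%N, [::]);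
          (1, [::], 10%N, [::]); (1, [::], 11%N, [::]); (qfrac 1 2, [::], 18%N, [:: 0]);
          (- qfrac 1 2, [:: 2], 18%N, [::]); (-1, [:: 3], 19%N, [::]); (1, [:: 6], 18%N, [::]);
          (-1, [:: 6], 20%N, [::]); (qfrac 1 2, [::], 18%N, [:: 1]); (-1, [::], 21%N, [:: 0]);
          (-1, [::], 21%N, [:: 1]); (1, [::], 18%N, [:: 3])];
      [:: (qfrac 1 2, [::], 11%N, [::]); (qfrac 1 2, [::], 10%N, [::]);
          (qfrac 1 2, [:: 0], 18%N, [::]); (- qfrac 1 2, [:: 3], 19%N, [::]);
          (- qfrac 1 2, [::], 21%N, [:: 0]); (- qfrac 1 2, [:: 6], 20%N, [::]);
          (qfrac 1 2, [:: 6], 21%N, [::]); (qfrac 1 2, [::], 21%N, [:: 3])];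
      [:: (- qfrac 1 2, [::], 0%N, [::]); (- qfrac 1 2, [:: 2], 18%N, [::]);
          (qfrac 1 2, [::], 13%N, [::]); (- qfrac 1 2, [:: 1], 18%N, [::]);
          (qfrac 1 2, [::], 12%N, [::]); (qfrac 1 2, [::], 14%N, [::]);
          (- qfrac 1 2, [::], 10%N, [::]); (- qfrac 1 2, [::], 18%N, [::]);
          (qfrac 1 2, [::], 18%N, [:: 0]); (qfrac 1 2, [::], 19%N, [::]);
          (- qfrac 1 2, [:: 4], 19%N, [::]); (qfrac 1 2, [::], 18%N, [:: 1]);
          (- qfrac 1 2, [:: 0], 22%N, [::]); (- qfrac 1 2, [:: 0], 19%N, [::]);
          (- qfrac 1 2, [::], 1%N, [::]); (qfrac 1 2, [::], 18%N, [:: 5]);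
          (- qfrac 1 2, [:: 7], 20%N, [::]); (1, [::], 18%N, [:: 3]);
          (- qfrac 1 2, [:: 1], 19%N, [::]); (1, [::], 21%N, [:: 4]);
          (qfrac 1 2, [::], 21%N, [:: 7]); (- qfrac 1 2, [:: 3], 22%N, [::])];
      [:: (1, [::], 9%N, [::]); (- qfrac 1 2, [::], 0%N, [::]); (- qfrac 1 2, [::], 13%N, [::]);
          (qfrac 1 2, [::], 18%N, [::]); (- qfrac 1 2, [:: 0], 18%N, [::]); (1, [::], 10%N, [::]);
          (qfrac 1 2, [::], 11%N, [::]); (- qfrac 1 2, [::], 18%N, [:: 0]);
          (- qfrac 1 2, [::], 12%N, [::]); (qfrac 1 2, [:: 2], 18%N, [::]);
          (qfrac 1 2, [:: 1], 18%N, [::]); (- qfrac 1 2, [::], 14%N, [::]);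
          (- qfrac 1 2, [::], 19%N, [::]); (- qfrac 1 2, [:: 3], 19%N, [::]);
          (qfrac 1 2, [:: 4], 19%N, [::]); (- qfrac 1 2, [:: 6], 20%N, [::]);
          (1, [:: 6], 19%N, [::]); (qfrac 1 2, [::], 21%N, [:: 0]);
          (- qfrac 1 2, [:: 6], 21%N, [::]); (qfrac 1 2, [:: 7], 20%N, [::]);
          (- qfrac 1 2, [::], 18%N, [:: 1]); (qfrac 1 2, [:: 0], 22%N, [::]);
          (qfrac 1 2, [:: 0], 19%N, [::]); (qfrac 1 2, [::], 1%N, [::]);
          (- qfrac 1 2, [::], 18%N, [:: 5]); (qfrac 1 2, [:: 1], 19%N, [::]);
          (-1, [::], 21%N, [:: 4]); (- qfrac 1 2, [::], 21%N, [:: 3]);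
          (- qfrac 1 2, [::], 21%N, [:: 7]); (qfrac 1 2, [:: 3], 22%N, [::])];
      [:: (-1, [::], 0%N, [::]); (1, [::], 9%N, [::]); (qfrac 1 2, [:: 0], 18%N, [::]);
          (qfrac 1 2, [::], 10%N, [::]); (qfrac 1 2, [::], 11%N, [::]);
          (- qfrac 1 2, [:: 3], 19%N, [::]); (- qfrac 1 2, [:: 6], 20%N, [::]);
          (- qfrac 1 2, [::], 21%N, [:: 0]); (qfrac 1 2, [:: 6], 21%N, [::]);
          (1, [::], 18%N, [:: 3]); (- qfrac 1 2, [::], 21%N, [:: 3])];
      [:: (qfrac 1 2, [::], 13%N, [::]); (- qfrac 1 2, [:: 1], 18%N, [::]);
          (qfrac 1 2, [::], 12%N, [::]); (qfrac 1 2, [::], 14%N, [::]);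
          (qfrac 1 2, [::], 10%N, [::]); (- qfrac 1 2, [::], 19%N, [::]);
          (- qfrac 1 2, [:: 4], 19%N, [::]); (qfrac 1 2, [:: 0], 19%N, [::]);
          (qfrac 1 2, [::], 1%N, [::]); (- qfrac 1 2, [::], 18%N, [:: 5]);
          (qfrac 1 2, [:: 1], 19%N, [::]); (qfrac 1 2, [::], 21%N, [:: 7]);
          (- qfrac 1 2, [:: 7], 20%N, [::]); (- qfrac 1 2, [:: 0], 22%N, [::]);
          (- qfrac 1 2, [:: 3], 22%N, [::])];
      [:: (- qfrac 1 2, [::], 12%N, [::]); (- qfrac 1 2, [:: 0], 18%N, [::]);
          (qfrac 1 2, [::], 11%N, [::]); (- qfrac 1 2, [::], 13%N, [::]);
          (qfrac 1 2, [:: 1], 18%N, [::]); (- qfrac 1 2, [::], 14%N, [::]);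
          (- qfrac 1 2, [:: 3], 19%N, [::]); (qfrac 1 2, [::], 19%N, [::]);
          (qfrac 1 2, [:: 4], 19%N, [::]); (- qfrac 1 2, [:: 0], 19%N, [::]);
          (- qfrac 1 2, [::], 1%N, [::]); (qfrac 1 2, [::], 18%N, [:: 5]);
          (qfrac 1 2, [:: 6], 20%N, [::]); (qfrac 1 2, [::], 21%N, [:: 0]);
          (qfrac 1 2, [::], 21%N, [:: 3]); (- qfrac 1 2, [:: 1], 19%N, [::]);
          (- qfrac 1 2, [:: 6], 21%N, [::]); (- qfrac 1 2, [::], 21%N, [:: 7]);
          (qfrac 1 2, [:: 7], 20%N, [::]); (qfrac 1 2, [:: 0], 22%N, [::]);
          (qfrac 1 2, [:: 3], 22%N, [::])];
      [:: (-1, [:: 0], 18%N, [::]); (1, [::], 22%N, [:: 0])];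
      [:: (- qfrac 1 2, [::], 19%N, [::]); (qfrac 1 2, [:: 0], 18%N, [::]);
          (qfrac 1 2, [::], 9%N, [::]); (qfrac 1 2, [::], 10%N, [::]);
          (qfrac 1 2, [::], 11%N, [::]); (qfrac 1 2, [::], 12%N, [::]);
          (qfrac 1 2, [::], 13%N, [::]); (- qfrac 1 2, [:: 1], 18%N, [::]);
          (qfrac 1 2, [::], 14%N, [::]); (- qfrac 1 2, [:: 3], 19%N, [::]);
          (- qfrac 1 2, [:: 4], 19%N, [::]); (qfrac 1 2, [::], 20%N, [:: 0]);
          (qfrac 1 2, [::], 6%N, [::]); (- qfrac 1 2, [:: 8], 18%N, [::]);
          (- qfrac 1 2, [:: 6], 20%N, [::]); (- qfrac 1 2, [::], 20%N, [::]);
          (- qfrac 1 2, [:: 7], 20%N, [::]); (-1, [::], 21%N, [:: 0]);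
          (- qfrac 1 2, [::], 21%N, [:: 1]); (qfrac 1 2, [::], 20%N, [:: 1]);
          (qfrac 1 2, [:: 0], 19%N, [::]); (qfrac 1 2, [::], 1%N, [::]);
          (- qfrac 1 2, [::], 18%N, [:: 5]); (qfrac 1 2, [:: 1], 19%N, [::]);
          (- qfrac 1 2, [::], 22%N, [:: 0])];
      [:: (- qfrac 1 2, [::], 6%N, [::]); (qfrac 1 2, [::], 20%N, [::]); (1, [:: 7], 18%N, [::]);
          (qfrac 1 2, [:: 8], 18%N, [::]); (- qfrac 1 2, [::], 19%N, [::]);
          (- qfrac 1 2, [:: 0], 18%N, [::]); (- qfrac 1 2, [::], 9%N, [::]);
          (- qfrac 1 2, [::], 10%N, [::]); (- qfrac 1 2, [::], 11%N, [::]);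
          (qfrac 1 2, [::], 12%N, [::]); (qfrac 1 2, [::], 13%N, [::]);
          (- qfrac 1 2, [:: 1], 18%N, [::]); (qfrac 1 2, [::], 14%N, [::]);
          (qfrac 1 2, [:: 3], 19%N, [::]); (- qfrac 1 2, [:: 4], 19%N, [::]);
          (- qfrac 1 2, [::], 20%N, [:: 0]); (- qfrac 1 2, [:: 7], 20%N, [::]);
          (qfrac 1 2, [:: 6], 20%N, [::]); (1, [::], 21%N, [:: 0]);
          (qfrac 1 2, [::], 21%N, [:: 1]); (- qfrac 1 2, [::], 20%N, [:: 1]);
          (qfrac 1 2, [:: 0], 19%N, [::]); (qfrac 1 2, [::], 1%N, [::]);
          (- qfrac 1 2, [::], 18%N, [:: 5]); (-1, [::], 18%N, [:: 3]);
          (qfrac 1 2, [:: 1], 19%N, [::]); (- qfrac 1 2, [::], 22%N, [:: 0])];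
      [:: (qfrac 1 2, [::], 13%N, [::]); (- qfrac 1 2, [:: 1], 18%N, [::]);
          (qfrac 1 2, [::], 14%N, [::]); (- qfrac 1 2, [::], 19%N, [::]);
          (- qfrac 1 2, [:: 4], 19%N, [::]); (- qfrac 1 2, [:: 7], 20%N, [::]);
          (qfrac 1 2, [:: 0], 19%N, [::]); (qfrac 1 2, [::], 1%N, [::]);
          (- qfrac 1 2, [::], 18%N, [:: 5]); (-1, [::], 18%N, [:: 3]);
          (qfrac 1 2, [:: 1], 19%N, [::]); (- qfrac 1 2, [::], 22%N, [:: 0]);
          (qfrac 1 2, [:: 7], 21%N, [::]); (qfrac 1 2, [::], 22%N, [:: 3])];
      [:: (qfrac 1 2, [::], 9%N, [::]); (qfrac 1 4, [::], 10%N, [::]); (-1, [:: 0], 18%N, [::]);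
          (qfrac 1 4, [::], 12%N, [::]); (qfrac 1 2, [::], 7%N, [::]);
          (- qfrac 1 2, [::], 20%N, [::]); (- qfrac 1 2, [:: 8], 19%N, [::]);
          (qfrac 1 2, [::], 20%N, [:: 4]); (qfrac 1 2, [::], 20%N, [:: 3]);
          (qfrac 1 2, [::], 21%N, [:: 0]); (- qfrac 1 2, [:: 6], 21%N, [::]);
          (qfrac 1 4, [:: 0], 22%N, [::]); (- qfrac 1 2, [::], 21%N, [:: 4]);
          (- qfrac 1 2, [::], 21%N, [:: 3]); (- qfrac 1 4, [::], 21%N, [:: 7]);
          (qfrac 1 4, [::], 22%N, [:: 0]); (- qfrac 1 4, [:: 7], 21%N, [::]);
          (- qfrac 1 4, [::], 22%N, [:: 3]); (qfrac 1 4, [:: 3], 22%N, [::])];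
      [:: (qfrac 1 2, [::], 1%N, [::]); (qfrac 1 2, [:: 0], 19%N, [::]);
          (- qfrac 1 2, [::], 9%N, [::]); (- qfrac 1 4, [::], 10%N, [::]);
          (qfrac 3 4, [::], 12%N, [::]); (qfrac 1 2, [::], 13%N, [::]);
          (- qfrac 1 2, [:: 1], 18%N, [::]); (qfrac 1 2, [::], 14%N, [::]);
          (- qfrac 1 2, [::], 18%N, [:: 5]); (- qfrac 1 2, [::], 19%N, [::]);
          (- qfrac 1 2, [:: 4], 19%N, [::]); (1, [:: 7], 19%N, [::]);
          (qfrac 1 2, [:: 8], 19%N, [::]); (- qfrac 1 2, [::], 20%N, [:: 3]);
          (- qfrac 1 2, [::], 7%N, [::]); (qfrac 1 2, [::], 20%N, [::]);
          (- qfrac 1 2, [::], 21%N, [:: 0]); (qfrac 1 2, [::], 21%N, [:: 3]);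
          (qfrac 1 2, [:: 6], 21%N, [::]); (- qfrac 1 2, [::], 20%N, [:: 4]);
          (- qfrac 1 4, [:: 0], 22%N, [::]); (- qfrac 1 2, [:: 7], 20%N, [::]);
          (qfrac 1 2, [:: 1], 19%N, [::]); (qfrac 1 2, [::], 21%N, [:: 4]);
          (qfrac 1 4, [::], 21%N, [:: 7]); (qfrac 1 4, [::], 22%N, [:: 0]);
          (- qfrac 1 4, [:: 7], 21%N, [::]); (- qfrac 1 4, [::], 22%N, [:: 3]);
          (- qfrac 1 4, [:: 3], 22%N, [::])];
      [:: (- qfrac 1 2, [:: 4], 19%N, [::]); (qfrac 1 2, [::], 13%N, [::]);
          (- qfrac 1 2, [:: 1], 18%N, [::]); (1, [::], 12%N, [::]); (qfrac 1 2, [::], 14%N, [::]);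
          (- qfrac 1 2, [::], 19%N, [::]); (qfrac 1 2, [:: 0], 19%N, [::]);
          (qfrac 1 2, [::], 1%N, [::]); (- qfrac 1 2, [::], 18%N, [:: 5]);
          (qfrac 1 2, [:: 1], 19%N, [::]); (- qfrac 1 2, [:: 7], 20%N, [::]);
          (- qfrac 1 2, [::], 22%N, [:: 0]); (qfrac 1 2, [:: 7], 21%N, [::]);
          (- qfrac 1 2, [::], 22%N, [:: 3])];
      [:: (qfrac 1 2, [:: 1], 19%N, [::]); (- qfrac 1 2, [:: 0], 18%N, [::]);
          (- qfrac 1 2, [::], 4%N, [::]); (- qfrac 1 2, [::], 0%N, [::]);
          (- qfrac 1 4, [::], 10%N, [::]); (- qfrac 1 2, [::], 11%N, [::]);
          (qfrac 1 2, [::], 18%N, [::]); (- qfrac 1 2, [::], 18%N, [:: 0]);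
          (- qfrac 1 4, [::], 12%N, [::]); (qfrac 1 2, [:: 1], 18%N, [::]);
          (qfrac 1 2, [::], 13%N, [::]); (- qfrac 1 2, [::], 14%N, [::]);
          (qfrac 1 2, [:: 2], 18%N, [::]); (-1, [::], 18%N, [:: 3]); (qfrac 1 2, [::], 1%N, [::]);
          (qfrac 1 2, [:: 0], 19%N, [::]); (- qfrac 1 2, [::], 18%N, [:: 5]);
          (qfrac 1 2, [:: 3], 19%N, [::]); (- qfrac 1 2, [::], 19%N, [:: 3]);
          (qfrac 1 2, [:: 4], 19%N, [::]); (qfrac 1 2, [:: 5], 19%N, [::]);
          (qfrac 1 2, [:: 6], 20%N, [::]); (- qfrac 1 4, [::], 21%N, [:: 7]);
          (- qfrac 1 2, [::], 19%N, [:: 4]); (- qfrac 1 2, [::], 18%N, [:: 1]);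
          (qfrac 1 2, [:: 7], 20%N, [::]); (qfrac 1 2, [::], 21%N, [:: 3]);
          (qfrac 1 2, [::], 21%N, [:: 0]); (- qfrac 1 2, [:: 6], 21%N, [::]);
          (qfrac 1 4, [:: 0], 22%N, [::]); (qfrac 1 4, [::], 22%N, [:: 0]);
          (- qfrac 1 4, [:: 7], 21%N, [::]); (qfrac 1 4, [::], 22%N, [:: 3]);
          (qfrac 1 4, [:: 3], 22%N, [::])];
      [:: (- qfrac 1 2, [:: 3], 19%N, [::]); (qfrac 1 2, [::], 0%N, [::]);
          (qfrac 1 2, [::], 4%N, [::]); (qfrac 1 2, [::], 18%N, [:: 0]);
          (qfrac 1 4, [::], 12%N, [::]); (- qfrac 1 2, [::], 18%N, [::]);
          (- qfrac 1 2, [:: 0], 18%N, [::]); (qfrac 1 4, [::], 10%N, [::]);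
          (qfrac 1 2, [::], 11%N, [::]); (- qfrac 1 2, [:: 2], 18%N, [::]);
          (-1, [:: 1], 18%N, [::]); (1, [::], 14%N, [::]); (- qfrac 1 2, [::], 19%N, [::]);
          (qfrac 1 2, [::], 19%N, [:: 3]); (- qfrac 1 2, [:: 5], 19%N, [::]);
          (-1, [:: 4], 19%N, [::]); (- qfrac 1 2, [::], 21%N, [:: 0]);
          (- qfrac 1 2, [:: 6], 20%N, [::]); (qfrac 1 2, [:: 6], 21%N, [::]);
          (qfrac 1 2, [::], 18%N, [:: 1]); (- qfrac 1 4, [:: 0], 22%N, [::]);
          (qfrac 1 2, [::], 19%N, [:: 4]); (- qfrac 1 2, [::], 21%N, [:: 3]);
          (qfrac 1 4, [::], 21%N, [:: 7]); (- qfrac 1 4, [:: 7], 21%N, [::]);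
          (- qfrac 1 4, [:: 3], 22%N, [::]); (qfrac 1 4, [::], 22%N, [:: 0]);
          (qfrac 1 4, [::], 22%N, [:: 3])];
      [:: (1, [:: 0], 18%N, [::]); (1, [::], 20%N, [:: 0]); (-1, [::], 21%N, [:: 0]);
          (-1, [::], 22%N, [:: 0])];
      [:: (qfrac 1 2, [:: 4], 19%N, [::]); (- qfrac 1 2, [::], 13%N, [::]);
          (- qfrac 1 2, [::], 9%N, [::]); (qfrac 1 2, [:: 1], 18%N, [::]);
          (- qfrac 1 2, [::], 12%N, [::]); (- qfrac 1 2, [::], 14%N, [::]);
          (- qfrac 1 2, [:: 0], 18%N, [::]); (- qfrac 1 2, [::], 10%N, [::]);
          (- qfrac 1 2, [::], 11%N, [::]); (qfrac 1 2, [:: 3], 19%N, [::]);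
          (qfrac 1 2, [::], 19%N, [::]); (- qfrac 1 2, [::], 20%N, [:: 0]);
          (- qfrac 1 2, [::], 6%N, [::]); (qfrac 1 2, [:: 8], 18%N, [::]);
          (qfrac 1 2, [:: 7], 20%N, [::]); (qfrac 1 2, [:: 6], 20%N, [::]);
          (qfrac 1 2, [::], 20%N, [::]); (1, [::], 21%N, [:: 0]);
          (- qfrac 1 2, [::], 21%N, [:: 1]); (qfrac 1 2, [::], 20%N, [:: 1]);
          (- qfrac 1 2, [:: 0], 19%N, [::]); (- qfrac 1 2, [::], 1%N, [::]);
          (qfrac 1 2, [::], 18%N, [:: 5]); (- qfrac 1 2, [:: 1], 19%N, [::]);
          (qfrac 1 2, [::], 22%N, [:: 0])];
      [:: (- qfrac 1 2, [::], 9%N, [::]); (- qfrac 1 2, [::], 12%N, [::]);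
          (qfrac 1 2, [:: 0], 18%N, [::]); (- qfrac 1 2, [::], 10%N, [::]);
          (- qfrac 1 2, [::], 11%N, [::]); (- qfrac 1 2, [::], 13%N, [::]);
          (qfrac 1 2, [:: 1], 18%N, [::]); (- qfrac 1 2, [::], 14%N, [::]);
          (qfrac 1 2, [::], 19%N, [::]); (qfrac 1 2, [:: 3], 19%N, [::]);
          (qfrac 1 2, [:: 4], 19%N, [::]); (qfrac 1 2, [:: 8], 18%N, [::]);
          (- qfrac 1 2, [::], 20%N, [:: 0]); (qfrac 1 2, [::], 6%N, [::]);
          (qfrac 1 2, [:: 6], 20%N, [::]); (qfrac 1 2, [::], 20%N, [::]);
          (qfrac 1 2, [:: 7], 20%N, [::]); (qfrac 1 2, [::], 21%N, [:: 1]);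
          (- qfrac 1 2, [::], 20%N, [:: 1]); (- qfrac 1 2, [:: 0], 19%N, [::]);
          (- qfrac 1 2, [::], 1%N, [::]); (qfrac 1 2, [::], 18%N, [:: 5]);
          (- qfrac 1 2, [:: 1], 19%N, [::]); (qfrac 1 2, [::], 22%N, [:: 0])];
      [:: (qfrac 1 2, [:: 7], 20%N, [::]); (qfrac 1 2, [:: 4], 19%N, [::]);
          (- qfrac 1 2, [::], 13%N, [::]); (qfrac 1 2, [:: 1], 18%N, [::]);
          (- qfrac 1 2, [::], 14%N, [::]); (- qfrac 1 2, [:: 0], 18%N, [::]);
          (- qfrac 1 2, [::], 10%N, [::]); (- qfrac 1 2, [::], 11%N, [::]);
          (qfrac 1 2, [:: 3], 19%N, [::]); (qfrac 1 2, [::], 19%N, [::]);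
          (qfrac 1 2, [:: 6], 20%N, [::]); (- qfrac 1 2, [:: 0], 19%N, [::]);
          (- qfrac 1 2, [::], 1%N, [::]); (qfrac 1 2, [::], 18%N, [:: 5]); (1, [::], 20%N, [:: 3]);
          (- qfrac 1 2, [:: 1], 19%N, [::]); (qfrac 1 2, [::], 21%N, [:: 0]);
          (- qfrac 1 2, [::], 21%N, [:: 3]); (- qfrac 1 2, [:: 6], 21%N, [::]);
          (qfrac 1 2, [::], 22%N, [:: 0]); (- qfrac 1 2, [:: 7], 21%N, [::]);
          (- qfrac 1 2, [::], 22%N, [:: 3])];
      [:: (- qfrac 1 2, [:: 0], 19%N, [::]); (- qfrac 1 2, [::], 1%N, [::]);
          (1, [:: 0], 18%N, [::]); (- qfrac 1 2, [::], 9%N, [::]); (qfrac 1 4, [::], 10%N, [::]);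
          (- qfrac 3 4, [::], 12%N, [::]); (- qfrac 1 2, [::], 13%N, [::]);
          (qfrac 1 2, [:: 1], 18%N, [::]); (- qfrac 1 2, [::], 14%N, [::]);
          (qfrac 1 2, [::], 18%N, [:: 5]); (qfrac 1 2, [::], 19%N, [::]);
          (qfrac 1 2, [:: 4], 19%N, [::]); (qfrac 1 2, [:: 8], 19%N, [::]);
          (- qfrac 1 2, [::], 7%N, [::]); (qfrac 1 2, [::], 20%N, [::]);
          (- qfrac 1 2, [::], 20%N, [:: 3]); (qfrac 1 2, [::], 20%N, [:: 4]);
          (- qfrac 1 2, [:: 1], 19%N, [::]); (- qfrac 1 2, [::], 21%N, [:: 0]);
          (qfrac 1 2, [::], 21%N, [:: 3]); (- qfrac 1 2, [::], 21%N, [:: 4]);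
          (qfrac 1 2, [:: 6], 21%N, [::]); (qfrac 1 4, [:: 0], 22%N, [::]);
          (qfrac 1 2, [:: 7], 20%N, [::]); (- qfrac 1 4, [::], 21%N, [:: 7]);
          (- qfrac 1 4, [::], 22%N, [:: 0]); (qfrac 1 4, [:: 7], 21%N, [::]);
          (qfrac 1 4, [::], 22%N, [:: 3]); (qfrac 1 4, [:: 3], 22%N, [::])];
      [:: (qfrac 1 2, [:: 0], 18%N, [::]); (- qfrac 1 2, [::], 9%N, [::]);
          (- qfrac 3 4, [::], 10%N, [::]); (- qfrac 1 2, [::], 11%N, [::]);
          (- qfrac 1 4, [::], 12%N, [::]); (qfrac 1 2, [:: 3], 19%N, [::]);
          (qfrac 1 2, [:: 8], 19%N, [::]); (qfrac 1 2, [::], 7%N, [::]);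
          (qfrac 1 2, [::], 20%N, [::]); (- qfrac 1 2, [::], 20%N, [:: 3]);
          (- qfrac 1 2, [::], 20%N, [:: 4]); (qfrac 1 2, [:: 6], 20%N, [::]);
          (qfrac 1 4, [::], 21%N, [:: 7]); (- qfrac 1 4, [:: 0], 22%N, [::]);
          (qfrac 1 2, [::], 21%N, [:: 4]); (- qfrac 1 4, [::], 22%N, [:: 0]);
          (qfrac 1 4, [:: 7], 21%N, [::]); (qfrac 1 4, [::], 22%N, [:: 3]);
          (- qfrac 1 4, [:: 3], 22%N, [::])];
      [:: (- qfrac 1 2, [:: 0], 19%N, [::]); (- qfrac 1 2, [::], 1%N, [::]);
          (qfrac 1 2, [:: 0], 18%N, [::]); (- qfrac 1 2, [::], 10%N, [::]);
          (- qfrac 1 2, [::], 11%N, [::]); (-1, [::], 18%N, [:: 0]); (1, [::], 15%N, [::]);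
          (- qfrac 1 2, [::], 13%N, [::]); (qfrac 1 2, [:: 1], 18%N, [::]);
          (- qfrac 1 2, [::], 14%N, [::]); (qfrac 1 2, [::], 18%N, [:: 5]);
          (qfrac 1 2, [:: 3], 19%N, [::]); (qfrac 1 2, [::], 19%N, [::]); (-1, [::], 19%N, [:: 3]);
          (qfrac 1 2, [:: 4], 19%N, [::]); (qfrac 1 2, [:: 6], 20%N, [::]);
          (qfrac 1 2, [::], 21%N, [:: 0]); (qfrac 1 2, [::], 21%N, [:: 3]);
          (- qfrac 1 2, [:: 1], 19%N, [::]); (- qfrac 1 2, [:: 6], 21%N, [::]);
          (qfrac 1 2, [:: 7], 20%N, [::]); (qfrac 1 2, [::], 22%N, [:: 0]);
          (- qfrac 1 2, [:: 7], 21%N, [::]); (qfrac 1 2, [::], 22%N, [:: 3])];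
      [:: (- qfrac 1 2, [::], 19%N, [::]); (qfrac 1 2, [::], 0%N, [::]);
          (qfrac 1 2, [::], 4%N, [::]); (- qfrac 1 2, [::], 18%N, [::]);
          (- qfrac 1 2, [:: 0], 18%N, [::]); (qfrac 3 4, [::], 10%N, [::]);
          (qfrac 1 2, [::], 11%N, [::]); (qfrac 1 2, [::], 18%N, [:: 0]);
          (- qfrac 1 4, [::], 12%N, [::]); (- qfrac 1 2, [:: 2], 18%N, [::]);
          (1, [::], 16%N, [::]); (- qfrac 1 2, [:: 3], 19%N, [::]);
          (qfrac 1 2, [::], 19%N, [:: 3]); (- qfrac 1 2, [:: 5], 19%N, [::]);
          (- qfrac 1 2, [:: 6], 20%N, [::]); (- qfrac 1 2, [::], 21%N, [:: 0]);
          (- qfrac 1 2, [::], 18%N, [:: 1]); (qfrac 1 2, [:: 6], 21%N, [::]);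
          (qfrac 1 4, [:: 7], 21%N, [::]); (qfrac 1 4, [:: 0], 22%N, [::]);
          (- qfrac 1 2, [::], 19%N, [:: 4]); (- qfrac 1 2, [::], 21%N, [:: 3]);
          (- qfrac 1 4, [::], 21%N, [:: 7]); (qfrac 1 4, [:: 3], 22%N, [::]);
          (- qfrac 1 4, [::], 22%N, [:: 0]); (- qfrac 1 4, [::], 22%N, [:: 3])];
      [:: (- qfrac 1 2, [::], 18%N, [::]); (qfrac 1 2, [::], 0%N, [::]);
          (qfrac 1 2, [::], 4%N, [::]); (1, [::], 8%N, [::]); (-1, [::], 9%N, [::]);
          (- qfrac 1 4, [::], 10%N, [::]); (qfrac 1 2, [::], 18%N, [:: 0]);
          (qfrac 1 4, [::], 12%N, [::]); (- qfrac 1 2, [:: 2], 18%N, [::]);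
          (- qfrac 1 2, [::], 13%N, [::]); (- qfrac 1 2, [:: 1], 18%N, [::]);
          (qfrac 1 2, [::], 14%N, [::]); (qfrac 1 2, [::], 19%N, [:: 3]);
          (- qfrac 1 2, [:: 4], 19%N, [::]); (- qfrac 1 2, [:: 5], 19%N, [::]);
          (qfrac 1 2, [::], 18%N, [:: 1]); (- qfrac 1 4, [:: 0], 22%N, [::]);
          (- qfrac 1 2, [:: 0], 19%N, [::]); (- qfrac 1 2, [::], 1%N, [::]);
          (qfrac 1 2, [::], 18%N, [:: 5]); (- qfrac 1 2, [:: 7], 20%N, [::]);
          (- qfrac 1 2, [:: 1], 19%N, [::]); (qfrac 1 2, [::], 19%N, [:: 4]);
          (qfrac 1 4, [::], 21%N, [:: 7]); (- qfrac 1 4, [::], 22%N, [:: 0]);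
          (qfrac 1 4, [:: 7], 21%N, [::]); (- qfrac 1 4, [::], 22%N, [:: 3]);
          (- qfrac 1 4, [:: 3], 22%N, [::])]].

Definition B3_table : dim_table :=
  DimTable B3_basis B3_reps B3_functionals B3_left_inverse B3_coefs B3_witnesses.

Lemma span_dim_B3_tensor2 : span_dim (bist_rels 3) (@tensor2_entries 3) 14.
Proof. by rewrite bist_rels_ratr; apply: (span_dim_of_table (T := B3_table)); vm_compute. Qed.

Theorem lemma7p3 :
  span_dim (bist_rels 3) (@tensor2_entries 3) 14 /\
  span_dim (orth_rels 2) (@tensor2_entries 2) 10.
Proof. exact: (conj span_dim_B3_tensor2 span_dim_O2_tensor2). Qed.
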